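(* Let $\Gamma$ be a countably infinite discrete group, $\Delta\subset\Gamma$ a nonamenable subgroup, and let $f\in\mathbb{Z}\Gamma$ satisfy $\{v\in\ell^2(\Gamma,\mathbb{R}): v\cdot f=0\}=\{0\}$. If $c\colon\Delta\to\mathbb{Z}\Gamma$ is a $1$-cocycle such that the map $\delta\mapsto c(\delta)f$ is a coboundary (i.e. there is $b'\in\mathbb{Z}\Gamma$ with $c(\delta)f=b'-\delta b'$ for all $\delta\in\Delta$), then $c$ is a coboundary, i.e. there is $b\in\mathbb{Z}\Gamma$ with $c(\delta)=b-\delta b$ for all $\delta\in\Delta$.
   Context: $\mathbb{Z}\Gamma$ is a left $\mathbb{Z}\Delta$-module by left multiplication; a $1$-cocycle $c\colon\Delta\to\mathbb{Z}\Gamma$ satisfies $c(\delta\delta')=c(\delta)+\delta c(\delta')$. For $v\in\ell^2(\Gamma,\mathbb{R})$ and $f\in\mathbb{Z}\Gamma$, $(v\cdot f)_\gamma=\sum_{\gamma'}v_{\gamma'}f_{\gamma'^{-1}\gamma}$. *)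

From Stdlib Require Import Reals ZArith List Classical ClassicalDescription.
Import ListNotations.
Set Implicit Arguments.

Record is_group (G : Type) (mul : G -> G -> G) (inv : G -> G) (e : G) : Prop := {
  grp_assoc : forall x y z, mul x (mul y z) = mul (mul x y) z;
  grp_id_l : forall x, mul e x = x;
  grp_id_r : forall x, mul x e = x;
  grp_inv_l : forall x, mul (inv x) x = e;
  grp_inv_r : forall x, mul x (inv x) = e }.

Definition countably_infinite (G : Type) : Prop :=
  exists enum : nat -> G,
    (forall m n, enum m = enum n -> m = n) /\ (forall g, exists n, enum n = g).

Definition is_subgroup (G : Type) (mul : G -> G -> G) (inv : G -> G) (e : G)
  (D : G -> Prop) : Prop :=
  D e /\ (forall x y, D x -> D y -> D (mul x y)) /\ (forall x, D x -> D (inv x)).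

Definition pb (P : Prop) : bool :=
  if excluded_middle_informative P then true else false.

Definition count_in (G : Type) (P : G -> Prop) (l : list G) : nat :=
  length (filter (fun x => pb (P x)) l).

(** Følner-type amenability of the subgroup D (as a discrete group):
    for every finite S ⊆ D and ε > 0 there is a finite nonempty F ⊆ D with
    |sF Δ F| < ε |F| for all s ∈ S.  Here |sF Δ F| = |sF \ F| + |F \ sF|,
    computed as #{x ∈ F | s x ∉ F} + #{x ∈ F | s⁻¹ x ∉ F}. *)
Definition amenable_subgroup (G : Type) (mul : G -> G -> G) (inv : G -> G)
  (D : G -> Prop) : Prop :=
  forall (S : list G) (eps : R), (forall s, In s S -> D s) -> (0 < eps)%R ->
  exists F : list G,
    NoDup F /\ F <> [] /\ (forall x, In x F -> D x) /\
    forall s, In s S ->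
      (INR (count_in (fun x => ~ In (mul s x) F) F
            + count_in (fun x => ~ In (mul (inv s) x) F) F)
       < eps * INR (length F))%R.

(** The integral group ring ZΓ: elements are finite formal sums Σ n_i g_i,
    represented as lists of pairs (g_i, n_i); the element is determined by
    its coefficient function. *)
Definition ZG (G : Type) := list (G * Z).

Definition coeff (G : Type) (x : ZG G) (g : G) : Z :=
  fold_right (fun p acc => ((if pb (fst p = g) then snd p else 0) + acc)%Z) 0%Z x.

Definition zg_eq (G : Type) (x y : ZG G) : Prop := forall g, coeff x g = coeff y g.

Definition zg_add (G : Type) (x y : ZG G) : ZG G := x ++ y.
Definition zg_opp (G : Type) (x : ZG G) : ZG G := map (fun p => (fst p, (- snd p)%Z)) x.
Definition zg_sub (G : Type) (x y : ZG G) : ZG G := zg_add x (zg_opp y).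

Definition zg_mul (G : Type) (mul : G -> G -> G) (x y : ZG G) : ZG G :=
  flat_map (fun p => map (fun q => (mul (fst p) (fst q), (snd p * snd q)%Z)) y) x.

Definition zg_lact (G : Type) (mul : G -> G -> G) (d : G) (x : ZG G) : ZG G :=
  map (fun p => (mul d (fst p), snd p)) x.

Definition is_cocycle (G : Type) (mul : G -> G -> G) (D : G -> Prop)
  (c : G -> ZG G) : Prop :=
  forall d d', D d -> D d' ->
    zg_eq (c (mul d d')) (zg_add (c d) (zg_lact mul d (c d'))).

Definition is_coboundary (G : Type) (mul : G -> G -> G) (D : G -> Prop)
  (a : G -> ZG G) : Prop :=
  exists b : ZG G, forall d, D d -> zg_eq (a d) (zg_sub b (zg_lact mul d b)).

Definition sumR (l : list R) : R := fold_right Rplus 0%R l.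

Definition in_l2 (G : Type) (v : G -> R) : Prop :=
  exists M : R, forall l : list G, NoDup l -> (sumR (map (fun g => v g ^ 2) l) <= M)%R.

(** Right action of ZΓ on ℓ²:  (v·f)_γ = Σ_{γ'} v_{γ'} f_{γ'^{-1}γ}.
    For f = Σ n_i h_i this equals Σ_i n_i v_{γ h_i^{-1}}. *)
Definition l2_act (G : Type) (mul : G -> G -> G) (inv : G -> G)
  (v : G -> R) (f : ZG G) (g : G) : R :=
  sumR (map (fun p => (v (mul g (inv (fst p))) * IZR (snd p))%R) f).

From Stdlib Require Import Reals ZArith List Lra Lia Psatz Classical ClassicalEpsilon
  ClassicalDescription Permutation FunctionalExtensionality.
Import ListNotations.
Open Scope R_scope.

(** The idea is to solve [w f = b'] with [w] in
  ℓ²(Γ): then for every [d ∈ Δ] the function [c(d) - (w - d w)] lies in ℓ²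
  and is killed by [f], hence vanishes, so [c(d) = w - d w]; afterwards [w]
  is shown to be integer valued and finitely supported, i.e. [w ∈ ZΓ].

  As [w f = b'] need not be solvable, we solve the regularised normal
  equations [(A + ε) y = b' f*], [A v = (v f) f*], approximately by gradient
  descent among finitely supported functions (Section [Descent]); the defects
  [u_d = c(d) - (y - d y)] then satisfy [‖u_d‖² = O(1)] and [‖u_d f‖² = O(ε)]
  (Section [Errors]).  Non-amenability of Δ gives an isoperimetric inequality
  and from it a spectral gap [‖y‖² ≤ K Σ_{s∈S} ‖y - s y‖²] (Section
  [SpectralGap]), so the approximate solutions stay bounded in ℓ²; as Γ is
  countable, a diagonal subsequence (Section [Diagonal]) converges pointwise
  to the desired [w] (Section [Solution]).  Finally [w] takes values in
  [w x + Z] on the infinite orbit [Δ⁻¹x], and a square-summable function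
  cannot stay away from Z on infinitely many points, so [w] is integral
  ([integral_solution], [coboundary_of_integral_solution]). *)

Lemma sumR_app l1 l2 : sumR (l1 ++ l2) = sumR l1 + sumR l2.
Proof. induction l1; simpl; [lra|]. rewrite IHl1; lra. Qed.

Lemma sumR_perm l1 l2 : Permutation l1 l2 -> sumR l1 = sumR l2.
Proof. induction 1; simpl; lra. Qed.

Lemma sumR_plus {A} (F H : A -> R) l :
  sumR (map (fun x => F x + H x) l) = sumR (map F l) + sumR (map H l).
Proof. induction l; simpl; lra. Qed.

Lemma sumR_scal {A} a (F : A -> R) l :
  sumR (map (fun x => a * F x) l) = a * sumR (map F l).
Proof. induction l; simpl; lra. Qed.

Lemma sumR_le {A} (F H : A -> R) l :
  (forall x, In x l -> F x <= H x) -> sumR (map F l) <= sumR (map H l).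
Proof.
  induction l; simpl; intros Hle; [lra|].
  assert (F a <= H a) by auto. assert (sumR (map F l) <= sumR (map H l)) by auto. lra.
Qed.

Lemma sumR_ext {A} (F H : A -> R) l :
  (forall x, In x l -> F x = H x) -> sumR (map F l) = sumR (map H l).
Proof. induction l; simpl; intros Heq; auto. rewrite Heq, IHl; auto. Qed.

Lemma sumR_zero {A} (F : A -> R) l :
  (forall x, In x l -> F x = 0) -> sumR (map F l) = 0.
Proof. induction l; simpl; intros H0; auto. rewrite H0, IHl; auto; lra. Qed.

Lemma sumR_nonneg {A} (F : A -> R) l :
  (forall x, In x l -> 0 <= F x) -> 0 <= sumR (map F l).
Proof. intros. rewrite <- (sumR_zero (fun _ => 0) l) by auto. apply sumR_le; auto. Qed.

Lemma sumR_ge_term {A} (F : A -> R) l a :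
  In a l -> (forall x, In x l -> 0 <= F x) -> F a <= sumR (map F l).
Proof.
  induction l; simpl; intros Ha Hn; [contradiction|].
  destruct Ha as [->|Ha].
  - assert (0 <= sumR (map F l)) by (apply sumR_nonneg; auto). lra.
  - assert (0 <= F a0) by auto. assert (F a <= sumR (map F l)) by auto. lra.
Qed.

Lemma sumR_const {A} (c : R) (l : list A) : sumR (map (fun _ => c) l) = INR (length l) * c.
Proof. induction l; simpl; [ring|]. rewrite IHl. destruct (length l); simpl; ring. Qed.

Lemma sumR_exchange {A B} (F : A -> B -> R) l1 l2 :
  sumR (map (fun x => sumR (map (fun y => F x y) l2)) l1) =
  sumR (map (fun y => sumR (map (fun x => F x y) l1)) l2).
Proof.
  induction l1; simpl.
  - rewrite sumR_zero; auto.
  - rewrite IHl1, (sumR_plus (fun y => F a y)). reflexivity.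
Qed.

Lemma sq_sum_le {A} (F : A -> R) l :
  (sumR (map F l))^2 <= INR (length l) * sumR (map (fun x => F x ^2) l).
Proof.
  induction l as [|a l IH]; [simpl; lra|].
  change (length (a::l)) with (S (length l)); rewrite S_INR, !map_cons.
  change (sumR (?x :: ?y)) with (x + sumR y).
  set (s := sumR (map F l)) in *. set (q := sumR (map (fun x => F x ^ 2) l)) in *.
  set (m := INR (length l)) in *.
  assert (Hm : 0 <= m) by apply pos_INR.
  assert (Hq : 0 <= q) by (apply sumR_nonneg; intros; nra).
  destruct (Req_dec m 0) as [E|E].
  - rewrite E in IH. assert (Hs : s = 0) by nra. rewrite Hs, E. nra.
  - assert (Hmpos : 0 < m) by lra.
    assert (Hcross : 2 * F a * s <= m * F a ^2 + s^2 / m).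
    { assert (0 <= (m * F a - s)^2 / m)
        by (apply Rmult_le_pos; [apply pow2_ge_0| apply Rlt_le, Rinv_0_lt_compat; auto]).
      assert ((m * F a - s)^2 / m = m * F a ^2 - 2 * F a * s + s^2/m) by (field; lra).
      lra. }
    assert (s^2 / m <= q).
    { apply Rmult_le_reg_l with m; [lra|].
      replace (m * (s^2/m)) with (s^2) by (field; lra). lra. }
    nra.
Qed.

Lemma count_sum {A} (P : A -> Prop) l :
  INR (count_in P l) = sumR (map (fun x => if pb (P x) then 1 else 0) l).
Proof.
  unfold count_in. induction l as [|a l IH]; [simpl; auto|].
  cbn [filter]. rewrite map_cons. change (sumR (?x :: ?y)) with (x + sumR y). rewrite <- IH.
  destruct (pb (P a)); [|lra].
  change (length (a :: ?t)) with (S (length t)). rewrite S_INR; lra.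
Qed.

Lemma count_zero {A} (P : A -> Prop) l : (forall x, In x l -> ~ P x) -> count_in P l = O.
Proof.
  unfold count_in. induction l; simpl; intros H; auto.
  unfold pb at 1. destruct excluded_middle_informative; [exfalso; apply (H a); auto|].
  apply IHl; auto.
Qed.

Lemma filter_length_split {A} (p : A -> bool) l :
  (length (filter p l) + length (filter (fun x => negb (p x)) l) = length l)%nat.
Proof. induction l; simpl; auto. destruct (p a); simpl; lia. Qed.

Lemma map_inj_nodup {A B} (h : A -> B) l :
  NoDup l -> (forall a b, h a = h b -> a = b) -> NoDup (map h l).
Proof.
  induction 1; simpl; intros Hi; constructor; auto.
  intro Hx. apply in_map_iff in Hx. destruct Hx as [y [E Hy]]. apply Hi in E. subst; auto.
Qed.

Lemma cover_bound {G} (P : G -> Prop) (K : nat) :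
  (forall l, NoDup l -> (forall x, In x l -> P x) -> (length l <= K)%nat) ->
  exists l, forall x, P x -> In x l.
Proof.
  intros H.
  assert (Hn : forall n, (exists l, NoDup l /\ length l = n /\ forall x, In x l -> P x)
                         \/ exists l, forall x, P x -> In x l).
  { induction n.
    - left; exists []; simpl; repeat split; auto. constructor. intros; contradiction.
    - destruct IHn as [[l [N1 [L1 P1]]]|Hfin]; auto.
      destruct (classic (forall x, P x -> In x l)) as [C|C]; [right; eauto|].
      apply not_all_ex_not in C. destruct C as [x C]. apply imply_to_and in C. destruct C.
      left. exists (x :: l). split; [constructor; auto|]. split; [simpl; auto|].
      intros y [->|Hy]; auto. }
  destruct (Hn (S K)) as [[l [N1 [L1 P1]]]|Hfin]; auto. specialize (H l N1 P1). lia.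
Qed.

(** Finitely supported real functions on a type [G] and their sums.  These
    are the functions the approximation procedure works with; for them the
    ℓ² norm is a finite sum. *)
Section FiniteSupport.
Context {G : Type}.
Implicit Types (u v w : G -> R) (l : list G).

Definition classic_eq_dec (x y : G) : {x = y} + {x <> y} := excluded_middle_informative (x = y).

Definition covers l v := forall g, v g <> 0 -> In g l.
Definition finsupp v := exists l, covers l v.

Definition nonzero_at v (g : G) : bool := if Req_EM_T (v g) 0 then false else true.

Lemma sum_filter_nonzero v l : sumR (map v l) = sumR (map v (filter (nonzero_at v) l)).
Proof.
  induction l; simpl; auto. unfold nonzero_at at 1.
  destruct (Req_EM_T (v a) 0) as [E|E]; simpl; rewrite IHl; [rewrite E; lra|auto].
Qed.

Lemma sum_cover_indep v l1 l2 : NoDup l1 -> NoDup l2 -> covers l1 v -> covers l2 v ->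
  sumR (map v l1) = sumR (map v l2).
Proof.
  intros N1 N2 C1 C2. rewrite (sum_filter_nonzero v l1), (sum_filter_nonzero v l2).
  apply sumR_perm, Permutation_map, NoDup_Permutation; try apply NoDup_filter; auto.
  intro x; rewrite !filter_In; unfold nonzero_at; destruct (Req_EM_T (v x) 0);
    split; intros [? ?]; try discriminate; split; auto.
Qed.

Definition fsum v : R :=
  match excluded_middle_informative (exists l, NoDup l /\ covers l v) with
  | left H => sumR (map v (proj1_sig (constructive_indefinite_description _ H)))
  | right _ => 0 end.

Lemma fsum_eq v l : NoDup l -> covers l v -> fsum v = sumR (map v l).
Proof.
  intros Nl C. unfold fsum. destruct excluded_middle_informative as [H|H].
  - destruct (constructive_indefinite_description _ H) as [l' [N' C']]; simpl.
    apply sum_cover_indep; auto.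
  - exfalso; apply H; eauto.
Qed.

Lemma fs_common u v : finsupp u -> finsupp v -> exists l, NoDup l /\ covers l u /\ covers l v.
Proof.
  intros [l1 C1] [l2 C2]. exists (nodup classic_eq_dec (l1 ++ l2)).
  split; [apply NoDup_nodup|].
  split; intros g Hg; apply nodup_In, in_or_app; auto.
Qed.

Lemma fs_cover u : finsupp u -> exists l, NoDup l /\ covers l u.
Proof. intros H; destruct (fs_common u u H H) as [l [? [? ?]]]; eauto. Qed.

Lemma fs_dom u v w : finsupp u -> finsupp v -> (forall x, u x = 0 -> v x = 0 -> w x = 0) ->
  finsupp w.
Proof.
  intros [l1 C1] [l2 C2] H. exists (l1 ++ l2). intros g Hg.
  destruct (Req_EM_T (u g) 0); [destruct (Req_EM_T (v g) 0)|].
  - exfalso; apply Hg; auto.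
  - apply in_or_app; right; auto.
  - apply in_or_app; left; auto.
Qed.

Lemma fs_plus u v : finsupp u -> finsupp v -> finsupp (fun x => u x + v x).
Proof. intros Hu Hv; apply fs_dom with u v; auto. intros x -> ->; ring. Qed.

Lemma fs_mul_l u v : finsupp v -> finsupp (fun x => u x * v x).
Proof. intros [l C]; exists l; intros g H; apply C; intro E; rewrite E in H; lra. Qed.

Lemma fs_mul_r u v : finsupp u -> finsupp (fun x => u x * v x).
Proof. intros [l C]; exists l; intros g H; apply C; intro E; rewrite E in H; lra. Qed.

Lemma fs_ext u v : finsupp u -> (forall x, u x = v x) -> finsupp v.
Proof. intros [l C] E; exists l; intros g H; apply C; rewrite E; auto. Qed.

Lemma fs_sub u v : finsupp u -> finsupp v -> finsupp (fun x => u x - v x).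
Proof. intros Hu Hv; apply fs_dom with u v; auto. intros x -> ->; ring. Qed.

Lemma fs_sq v : finsupp v -> finsupp (fun x => v x ^ 2).
Proof. intros H; apply fs_ext with (fun x => v x * v x); [apply fs_mul_r; auto|intros; ring]. Qed.

Lemma fs_zero : finsupp (fun _ => 0).
Proof. exists nil; intros g H; lra. Qed.

Lemma fsum_plus u v : finsupp u -> finsupp v -> fsum (fun x => u x + v x) = fsum u + fsum v.
Proof.
  intros Hu Hv; destruct (fs_common u v Hu Hv) as [l [Nl [C1 C2]]].
  rewrite !(fsum_eq _ l); auto using sumR_plus.
  intros g H. destruct (Req_EM_T (u g) 0); [apply C2; lra| apply C1; auto].
Qed.

Lemma fsum_scal a u : finsupp u -> fsum (fun x => a * u x) = a * fsum u.
Proof.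
  intros Hu; destruct (fs_cover u Hu) as [l [Nl C]].
  rewrite !(fsum_eq _ l); auto using sumR_scal.
  intros g H; apply C; intro E; rewrite E in H; lra.
Qed.

Lemma fsum_le u v : finsupp u -> finsupp v -> (forall x, u x <= v x) -> fsum u <= fsum v.
Proof.
  intros Hu Hv H; destruct (fs_common u v Hu Hv) as [l [Nl [C1 C2]]].
  rewrite !(fsum_eq _ l); auto using sumR_le.
Qed.

Lemma fsum_zero : fsum (fun _ => 0) = 0.
Proof. rewrite (fsum_eq _ nil); simpl; auto. constructor. intros g H; lra. Qed.

Lemma fsum_nonneg u : finsupp u -> (forall x, 0 <= u x) -> 0 <= fsum u.
Proof. intros Hu H; rewrite <- fsum_zero; apply fsum_le; auto using fs_zero. Qed.

Lemma fsum_ext u v : (forall x, u x = v x) -> fsum u = fsum v.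
Proof. intros H; replace v with u; auto; apply functional_extensionality; auto. Qed.

Lemma fsum_comb2 (a b : R) u v : finsupp u -> finsupp v ->
  fsum (fun x => a * u x + b * v x) = a * fsum u + b * fsum v.
Proof. intros. rewrite fsum_plus, !fsum_scal; auto; apply fs_mul_l; auto. Qed.

Lemma fsum_comb3 (a b c : R) u v w : finsupp u -> finsupp v -> finsupp w ->
  fsum (fun x => a * u x + b * v x + c * w x) = a * fsum u + b * fsum v + c * fsum w.
Proof.
  intros Hu Hv Hw.
  assert (Hab : finsupp (fun x => a * u x + b * v x)) by (apply fs_plus; apply fs_mul_l; auto).
  rewrite fsum_plus, fsum_comb2, fsum_scal; auto. apply fs_mul_l; auto.
Qed.

Lemma fsum_reindex (s t : G -> G) u : (forall x, s (t x) = x) -> (forall x, t (s x) = x) ->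
  finsupp u -> fsum (fun x => u (s x)) = fsum u.
Proof.
  intros st ts Hu. destruct (fs_cover u Hu) as [l [Nl C]].
  rewrite (fsum_eq u l), (fsum_eq _ (map t l)); auto.
  - rewrite map_map. apply sumR_ext; intros; rewrite st; auto.
  - apply map_inj_nodup; auto. intros a b Hab. rewrite <- (st a), Hab, st; auto.
  - intros g H. rewrite <- (ts g). apply in_map; auto.
Qed.

Lemma fs_reindex (s t : G -> G) u : (forall x, t (s x) = x) -> finsupp u ->
  finsupp (fun x => u (s x)).
Proof. intros ts [l C]. exists (map t l). intros g H. rewrite <- (ts g). apply in_map; auto. Qed.

Lemma fs_sumlist {A} (F : A -> G -> R) L : (forall p, In p L -> finsupp (F p)) ->
  finsupp (fun x => sumR (map (fun p => F p x) L)).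
Proof. induction L; simpl; intros; [apply fs_zero|apply fs_plus; auto]. Qed.

Lemma fsum_sumlist {A} (F : A -> G -> R) L : (forall p, In p L -> finsupp (F p)) ->
  fsum (fun x => sumR (map (fun p => F p x) L)) = sumR (map (fun p => fsum (F p)) L).
Proof.
  induction L; simpl; intros; [apply fsum_zero|].
  rewrite fsum_plus, IHL; auto. apply fs_sumlist; auto.
Qed.

Definition sqnorm v := fsum (fun x => v x ^ 2).
Definition inner u v := fsum (fun x => u x * v x).

Lemma inner_sym u v : inner u v = inner v u.
Proof. unfold inner; apply fsum_ext; intros; ring. Qed.

Lemma sqnorm_nonneg v : finsupp v -> 0 <= sqnorm v.
Proof. intros; apply fsum_nonneg; [apply fs_sq; auto| intros; nra]. Qed.

Lemma sqnorm_sub_le u v : finsupp u -> finsupp v ->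
  sqnorm (fun x => u x - v x) <= 2 * sqnorm u + 2 * sqnorm v.
Proof.
  intros Hu Hv. unfold sqnorm. rewrite <- fsum_comb2 by (apply fs_sq; auto).
  apply fsum_le.
  - apply fs_sq, fs_sub; auto.
  - apply fs_plus; apply fs_mul_l, fs_sq; auto.
  - intros x. assert (0 <= (u x + v x)^2) by apply pow2_ge_0. nra.
Qed.

Lemma sqnorm_sub_scal u v t : finsupp u -> finsupp v ->
  sqnorm (fun x => u x - t * v x) = sqnorm u - 2 * t * inner u v + t ^ 2 * sqnorm v.
Proof.
  intros Hu Hv. unfold sqnorm, inner.
  rewrite (fsum_ext _ (fun x => 1 * u x ^ 2 + (-2 * t) * (u x * v x) + t ^ 2 * v x ^ 2))
    by (intros; ring).
  rewrite fsum_comb3; auto using fs_sq, fs_mul_l. ring.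
Qed.

Lemma inner_sub_scal w u v t : finsupp u -> finsupp v ->
  inner w (fun x => u x - t * v x) = inner w u - t * inner w v.
Proof.
  intros Hu Hv. unfold inner.
  rewrite (fsum_ext _ (fun x => 1 * (w x * u x) + (- t) * (w x * v x))) by (intros; ring).
  rewrite fsum_comb2; auto using fs_mul_l. ring.
Qed.

Lemma fs_abs w : finsupp w -> finsupp (fun x => Rabs (w x)).
Proof. intros Hw; apply fs_dom with w w; auto. intros x -> _; apply Rabs_R0. Qed.

Lemma fsum_abs_le w : finsupp w -> Rabs (fsum w) <= fsum (fun x => Rabs (w x)).
Proof.
  intros Hw. apply Rabs_le. split.
  - rewrite <- (Rmult_1_l (fsum _)), Ropp_mult_distr_l, <- fsum_scal by (apply fs_abs; auto).
    apply fsum_le; auto using fs_abs, fs_mul_l.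
    intros x. pose proof (Rle_abs (- w x)). rewrite Rabs_Ropp in *. lra.
  - apply fsum_le; auto using fs_abs. intros x; apply Rle_abs.
Qed.

Lemma young_abs (lam a b : R) : 0 < lam -> 2 * Rabs (a * b) <= lam * a ^ 2 + b ^ 2 / lam.
Proof.
  intros Hl. rewrite Rabs_mult.
  assert (H : 0 <= (lam * Rabs a - Rabs b) ^ 2 / lam)
    by (apply Rmult_le_pos; [apply pow2_ge_0|left; apply Rinv_0_lt_compat; auto]).
  replace ((lam * Rabs a - Rabs b) ^ 2 / lam)
    with (lam * Rabs a ^ 2 - 2 * Rabs a * Rabs b + Rabs b ^ 2 / lam) in H by (field; lra).
  rewrite <- !Rsqr_pow2, <- !Rsqr_abs in *. rewrite !Rsqr_pow2 in *. lra.
Qed.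

Lemma two_inner_le u v lam : finsupp u -> finsupp v -> 0 < lam ->
  2 * Rabs (inner u v) <= lam * sqnorm u + sqnorm v / lam.
Proof.
  intros Hu Hv Hl. unfold inner, sqnorm, Rdiv.
  assert (Huv : finsupp (fun x => u x * v x)) by (apply fs_mul_l; auto).
  replace (fsum (fun x => v x ^ 2) * / lam) with (/ lam * fsum (fun x => v x ^ 2)) by ring.
  rewrite <- fsum_comb2 by (apply fs_sq; auto).
  eapply Rle_trans; [apply Rmult_le_compat_l; [lra|apply fsum_abs_le; auto]|].
  rewrite <- fsum_scal by (apply fs_abs; auto).
  apply fsum_le; auto using fs_abs, fs_mul_l.
  - apply fs_plus; apply fs_mul_l, fs_sq; auto.
  - intros x. pose proof (young_abs lam (u x) (v x) Hl). unfold Rdiv in *. lra.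
Qed.

Definition indicator l : G -> R := fun x => if in_dec classic_eq_dec x l then 1 else 0.

Lemma fs_indicator l : finsupp (indicator l).
Proof. exists l; intros g H; unfold indicator in H; destruct in_dec; auto; lra. Qed.

Lemma indicator_01 l x : indicator l x = 0 \/ indicator l x = 1.
Proof. unfold indicator; destruct in_dec; auto. Qed.

Lemma fsum_indicator_mul l u : NoDup l -> fsum (fun x => indicator l x * u x) = sumR (map u l).
Proof.
  intros Nl. rewrite (fsum_eq _ l); auto.
  - apply sumR_ext; intros x Hx. unfold indicator; destruct in_dec; [ring|contradiction].
  - intros g Hg. unfold indicator in Hg; destruct in_dec; auto. exfalso; apply Hg; ring.
Qed.

Lemma fsum_indicator l : NoDup l -> fsum (indicator l) = INR (length l).
Proof.
  intros Nl. rewrite (fsum_ext _ (fun x => indicator l x * 1)) by (intros; ring).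
  rewrite fsum_indicator_mul, sumR_const; auto; ring.
Qed.

Lemma sum_le_sqnorm v l : NoDup l -> finsupp v -> sumR (map (fun x => v x ^ 2) l) <= sqnorm v.
Proof.
  intros Nl Hv. rewrite <- fsum_indicator_mul; auto. apply fsum_le.
  - apply fs_mul_l, fs_sq; auto.
  - apply fs_sq; auto.
  - intros x. assert (0 <= v x ^ 2) by apply pow2_ge_0.
    destruct (indicator_01 l x) as [-> | ->]; lra.
Qed.

Lemma point_le_sqnorm v g : finsupp v -> v g ^ 2 <= sqnorm v.
Proof.
  intros Hv. pose proof (sum_le_sqnorm v [g]) as H. simpl in H. rewrite Rplus_0_r in H.
  apply H; auto. constructor; auto; constructor.
Qed.

End FiniteSupport.

Lemma nat_above (r : R) : exists n : nat, r < INR n.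
Proof.
  destruct (archimed r) as [Hup _]. destruct (Z_le_gt_dec 0 (up r)) as [Hp|Hp].
  - exists (Z.to_nat (up r)). rewrite INR_IZR_INZ, Z2Nat.id; auto.
  - exists O. apply Z.gt_lt, IZR_lt in Hp. simpl. lra.
Qed.

Lemma inv_succ_eventually_le (eta : R) : 0 < eta ->
  exists K, forall n, (K <= n)%nat -> / INR (S n) <= eta.
Proof.
  intros Heta. destruct (nat_above (/ eta)) as [K HK]. exists K. intros n Hn.
  assert (INR K <= INR n) by (apply le_INR; lia).
  assert (0 < / eta) by (apply Rinv_0_lt_compat; auto).
  rewrite S_INR. replace eta with (/ / eta) by (field; lra).
  apply Rinv_le_contravar; lra.
Qed.

Lemma cv_const c : Un_cv (fun _ => c) c.
Proof. intros eps H. exists O. intros. unfold R_dist. rewrite Rminus_diag, Rabs_R0; auto. Qed.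

Lemma cv_sq u l : Un_cv u l -> Un_cv (fun n => u n ^ 2) (l ^ 2).
Proof.
  intros H eps He. destruct (CV_mult u u l l H H eps He) as [K HK].
  exists K; intros n Hn. replace (u n ^ 2) with (u n * u n) by ring.
  replace (l ^ 2) with (l * l) by ring. auto.
Qed.

Lemma cv_sumR {A} (F : nat -> A -> R) (L : A -> R) l :
  (forall p, In p l -> Un_cv (fun n => F n p) (L p)) ->
  Un_cv (fun n => sumR (map (F n) l)) (sumR (map L l)).
Proof. induction l; simpl; intros H; [apply cv_const|apply CV_plus; auto]. Qed.

Lemma cv_le_eventually u l M : Un_cv u l -> (exists K, forall n, (n >= K)%nat -> u n <= M) ->
  l <= M.
Proof.
  intros H [K HK]. apply Rnot_lt_le; intro Hl.
  destruct (H (l - M)) as [K2 H2]; [lra|].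
  specialize (H2 (max K K2) ltac:(lia)). specialize (HK (max K K2) ltac:(lia)).
  unfold R_dist in H2. apply Rabs_def2 in H2. lra.
Qed.

Lemma cv_le u l M : Un_cv u l -> (forall n, u n <= M) -> l <= M.
Proof. intros H H2. apply (cv_le_eventually u); auto. exists O; auto. Qed.

Lemma cv_limit_zero u l C : Un_cv u l -> (forall n, u n ^ 2 <= C * / INR (S n)) -> l = 0.
Proof.
  intros Hu Hsmall.
  assert (Hle : forall eta, 0 < eta -> l ^ 2 <= eta).
  { intros eta Heta. apply (cv_le_eventually (fun n => u n ^ 2)); [apply cv_sq; auto|].
    destruct (Rle_dec C 0) as [HC|HC].
    - exists O. intros n _. eapply Rle_trans; [apply Hsmall|].
      assert (0 < / INR (S n)) by (apply Rinv_0_lt_compat, lt_0_INR; lia). nra.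
    - destruct (inv_succ_eventually_le (eta / C)) as [K HK].
      { apply Rdiv_lt_0_compat; lra. }
      exists K. intros n Hn. eapply Rle_trans; [apply Hsmall|].
      specialize (HK n Hn). apply Rmult_le_compat_l with (r := C) in HK; [|lra].
      replace (C * (eta / C)) with eta in HK by (field; lra). lra. }
  destruct (Req_dec l 0) as [E|E]; auto. exfalso.
  assert (0 < l ^ 2) by (apply pow_lt_0_compat || nra).
  specialize (Hle (l ^ 2 / 2) ltac:(lra)). lra.
Qed.

Definition strictly_incr (phi : nat -> nat) := forall n, (phi n < phi (S n))%nat.

Lemma strictly_incr_ge phi : strictly_incr phi -> forall n, (n <= phi n)%nat.
Proof. intros H n; induction n; [lia|]. specialize (H n); lia. Qed.

Lemma strictly_incr_mono phi : strictly_incr phi -> forall n m, (n < m)%nat -> (phi n < phi m)%nat.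
Proof.
  intros H n m Hnm. induction m; [lia|].
  destruct (Nat.eq_dec n m); [subst; apply H|].
  specialize (H m). assert (n < m)%nat by lia. specialize (IHm H0). lia.
Qed.

Lemma strictly_incr_comp phi psi :
  strictly_incr phi -> strictly_incr psi -> strictly_incr (fun n => phi (psi n)).
Proof. intros H1 H2 n. apply strictly_incr_mono; auto. Qed.

Lemma bolzano_weierstrass_subseq (u : nat -> R) M : (forall n, Rabs (u n) <= M) ->
  exists phi, strictly_incr phi /\ exists l, Un_cv (fun n => u (phi n)) l.
Proof.
  intros Hb.
  destruct (Bolzano_Weierstrass u (fun c => -M <= c <= M)) as [l Hl].
  { apply compact_P3. }
  { intros n; specialize (Hb n); unfold Rabs in Hb; destruct Rcase_abs in Hb; lra. }
  assert (Hnext : forall K k, exists p, (K <= p)%nat /\ Rabs (u p - l) < / INR (S k)).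
  { intros K k. assert (Hpos : 0 < / INR (S k)) by (apply Rinv_0_lt_compat, lt_0_INR; lia).
    destruct (Hl (disc l (mkposreal _ Hpos)) K) as [p [Hp1 Hp2]].
    - exists (mkposreal _ Hpos). intros y Hy; auto.
    - exists p; split; auto. }
  set (next := fun K k => proj1_sig (constructive_indefinite_description _ (Hnext K k))).
  assert (Hnext' : forall K k, (K <= next K k)%nat /\ Rabs (u (next K k) - l) < / INR (S k)).
  { intros; unfold next; destruct constructive_indefinite_description; auto. }
  set (phi := fix phi n := match n with O => next O O | S n => next (S (phi n)) (S n) end).
  exists phi. split.
  - intros n. simpl. destruct (Hnext' (S (phi n)) (S n)). lia.
  - exists l. intros eps He.
    destruct (inv_succ_eventually_le eps He) as [K HK]. exists K. intros n Hn. unfold R_dist.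
    assert (Hd : Rabs (u (phi n) - l) < / INR (S n)) by (destruct n; simpl; apply Hnext').
    specialize (HK n Hn). lra.
Qed.

Definition bw_subseq (u : nat -> R) : nat -> nat :=
  match excluded_middle_informative
          (exists phi, strictly_incr phi /\ exists l, Un_cv (fun n => u (phi n)) l) with
  | left H => proj1_sig (constructive_indefinite_description _ H)
  | right _ => fun n => n end.

Lemma bw_subseq_spec u M : (forall n, Rabs (u n) <= M) ->
  strictly_incr (bw_subseq u) /\ exists l, Un_cv (fun n => u (bw_subseq u n)) l.
Proof.
  intros Hb. unfold bw_subseq. destruct excluded_middle_informative as [H|H].
  - destruct constructive_indefinite_description; simpl; auto.
  - exfalso; apply H; eapply bolzano_weierstrass_subseq; eauto.
Qed.

Section Diagonal.
Context {G : Type}.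
Variable enum : nat -> G.
Hypothesis Hsurj : forall g, exists k, enum k = g.
Variable y : nat -> G -> R.
Variable M : R.
Hypothesis Hb : forall n g, Rabs (y n g) <= M.

(** [diag_subseq k] makes [y] converge at [enum 0, ..., enum k]. *)
Fixpoint diag_subseq (k : nat) : nat -> nat :=
  match k with
  | O => bw_subseq (fun n => y n (enum O))
  | S k => fun n => diag_subseq k (bw_subseq (fun m => y (diag_subseq k m) (enum (S k))) n)
  end.

Lemma diag_subseq_spec k :
  strictly_incr (diag_subseq k) /\ exists l, Un_cv (fun n => y (diag_subseq k n) (enum k)) l.
Proof.
  induction k; simpl.
  - apply (bw_subseq_spec (fun n => y n (enum O)) M); auto.
  - destruct IHk as [H1 _].
    destruct (bw_subseq_spec (fun m => y (diag_subseq k m) (enum (S k))) M) as [H2 H3]; auto.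
    split; auto. apply strictly_incr_comp; auto.
Qed.

Lemma diag_subseq_tail k n : (k <= n)%nat ->
  forall j, exists m, (j <= m)%nat /\ diag_subseq n j = diag_subseq k m.
Proof.
  induction n; intros Hk j.
  - assert (k = O) by lia; subst. exists j; split; auto.
  - destruct (Nat.eq_dec k (S n)); [subst; exists j; auto|].
    simpl. set (s := bw_subseq (fun m => y (diag_subseq n m) (enum (S n)))).
    assert (Hs : strictly_incr s) by (apply (bw_subseq_spec _ M); auto).
    destruct (IHn ltac:(lia) (s j)) as [m [Hm1 Hm2]].
    exists m; split; auto. pose proof (strictly_incr_ge s Hs j); lia.
Qed.

Lemma diagonal_extraction :
  exists phi, strictly_incr phi /\ exists w : G -> R, forall g, Un_cv (fun n => y (phi n) g) (w g).
Proof.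
  exists (fun n => diag_subseq n n). split.
  - intros n. simpl. set (s := bw_subseq (fun m => y (diag_subseq n m) (enum (S n)))).
    assert (Hs : strictly_incr s) by (apply (bw_subseq_spec _ M); auto).
    apply strictly_incr_mono; [apply diag_subseq_spec|].
    pose proof (strictly_incr_ge s Hs (S n)). lia.
  - assert (Hex : forall g, exists l, Un_cv (fun n => y (diag_subseq n n) g) l).
    { intros g. destruct (Hsurj g) as [k <-]. destruct (diag_subseq_spec k) as [_ [l Hl]].
      exists l. intros eps He. destruct (Hl eps He) as [K HK]. exists (max K k). intros n Hn.
      destruct (diag_subseq_tail k n ltac:(lia) n) as [m [Hm1 Hm2]]. rewrite Hm2. apply HK. lia. }
    exists (fun g => proj1_sig (constructive_indefinite_description _ (Hex g))).
    intros g. destruct constructive_indefinite_description; simpl; auto.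
Qed.

End Diagonal.

Lemma limit_sq_sum_le {G} (v : nat -> G -> R) (w : G -> R) M :
  (forall n, finsupp (v n)) -> (forall n, sqnorm (v n) <= M) ->
  (forall g, Un_cv (fun n => v n g) (w g)) ->
  forall l, NoDup l -> sumR (map (fun g => w g ^ 2) l) <= M.
Proof.
  intros Hfs Hbd Hcv l Nl. apply (cv_le (fun n => sumR (map (fun g => v n g ^ 2) l))).
  - apply (cv_sumR (fun n g => v n g ^ 2)). intros g _. apply cv_sq; auto.
  - intros n. eapply Rle_trans; [apply sum_le_sqnorm|]; auto.
Qed.

(** A square-summable function is integer valued at [x] as soon as it takes
    values in [w x + Z] at arbitrarily many distinct points: otherwise those
    values stay at distance [η > 0] from [Z] and their squares sum to infinity. *)
Lemma integral_val {G} (w : G -> R) (M : R) (x : G)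
  (Hw : forall l, NoDup l -> sumR (map (fun g => w g ^ 2) l) <= M)
  (Horb : forall n, exists l, NoDup l /\ length l = n /\
                       forall y, In y l -> exists k : Z, w y = w x - IZR k) :
  exists k, w x = IZR k.
Proof.
  set (r := w x). destruct (archimed r) as [H1 H2]. set (k0 := (up r - 1)%Z).
  assert (Hk0 : IZR k0 <= r < IZR k0 + 1) by (unfold k0; rewrite minus_IZR; simpl; lra).
  destruct (Req_dec r (IZR k0)) as [E|E]; [exists k0; auto|].
  set (eta := Rmin (r - IZR k0) (IZR k0 + 1 - r)).
  assert (Heta : 0 < eta) by (apply Rmin_glb_lt; lra).
  assert (Hfar : forall k, eta <= Rabs (r - IZR k)).
  { intros k. destruct (Z.le_gt_cases k k0) as [Hk|Hk].
    - apply IZR_le in Hk. assert (eta <= r - IZR k0) by apply Rmin_l. rewrite Rabs_right; lra.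
    - assert (Hk' : (k0 + 1 <= k)%Z) by lia. apply IZR_le in Hk'. rewrite plus_IZR in Hk'.
      assert (eta <= IZR k0 + 1 - r) by apply Rmin_r. rewrite Rabs_left1; lra. }
  destruct (nat_above (M / eta ^ 2)) as [n Hn].
  destruct (Horb n) as [l [Nl [Ll Pl]]].
  assert (INR n * eta ^ 2 <= sumR (map (fun g => w g ^ 2) l)).
  { rewrite <- Ll, <- sumR_const. apply sumR_le. intros y Hy. destruct (Pl y Hy) as [k Hk].
    rewrite Hk. specialize (Hfar k). fold r.
    rewrite <- (pow2_abs (r - IZR k)). apply pow_incr; lra. }
  specialize (Hw l Nl).
  assert (M < INR n * eta ^ 2).
  { apply Rmult_lt_reg_r with (/ eta ^ 2); [apply Rinv_0_lt_compat; nra|].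
    rewrite Rmult_assoc, Rinv_r, Rmult_1_r; [auto|nra]. }
  lra.
Qed.

Section Group.
Context {G : Type}.
Variables (mul : G -> G -> G) (inv : G -> G) (e : G).
Hypothesis HG : is_group mul inv e.
Implicit Types (u v w : G -> R) (f : ZG G) (d h g s : G).

Lemma cancel_inv_r g h : mul (mul g (inv h)) h = g.
Proof. rewrite <- (grp_assoc HG), (grp_inv_l HG), (grp_id_r HG); auto. Qed.

Lemma cancel_r_inv g h : mul (mul g h) (inv h) = g.
Proof. rewrite <- (grp_assoc HG), (grp_inv_r HG), (grp_id_r HG); auto. Qed.

Lemma cancel_inv_l d (x : G) : mul (inv d) (mul d x) = x.
Proof. rewrite (grp_assoc HG), (grp_inv_l HG), (grp_id_l HG); auto. Qed.

Lemma cancel_l_inv d (x : G) : mul d (mul (inv d) x) = x.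
Proof. rewrite (grp_assoc HG), (grp_inv_r HG), (grp_id_l HG); auto. Qed.

Lemma inv_inv (x : G) : inv (inv x) = x.
Proof.
  rewrite <- (grp_id_r HG (inv (inv x))), <- (grp_inv_l HG x), (grp_assoc HG),
    (grp_inv_l HG (inv x)), (grp_id_l HG); auto.
Qed.

Lemma fs_lshift s w : finsupp w -> finsupp (fun x => w (mul s x)).
Proof. intros; apply fs_reindex with (t := mul (inv s)); auto. intros; apply cancel_inv_l. Qed.

Lemma fsum_lshift s w : finsupp w -> fsum (fun x => w (mul s x)) = fsum w.
Proof.
  intros; apply fsum_reindex with (t := mul (inv s)); auto; intros;
    [apply cancel_l_inv|apply cancel_inv_l].
Qed.

Lemma fs_rshift h v : finsupp v -> finsupp (fun g => v (mul g (inv h))).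
Proof. intros; apply fs_reindex with (t := fun x => mul x h); auto. intros; apply cancel_inv_r. Qed.

Lemma fsum_rshift h v : finsupp v -> fsum (fun g => v (mul g (inv h))) = fsum v.
Proof.
  intros; apply fsum_reindex with (t := fun x => mul x h); auto; intros;
    [apply cancel_r_inv|apply cancel_inv_r].
Qed.

Definition translate d v : G -> R := fun x => v (mul (inv d) x).

Lemma fs_translate d v : finsupp v -> finsupp (translate d v).
Proof. apply fs_lshift. Qed.

Lemma sqnorm_translate d v : finsupp v -> sqnorm (translate d v) = sqnorm v.
Proof. intros; apply (fsum_lshift (inv d) (fun x => v x ^ 2)), fs_sq; auto. Qed.

Definition ract f v : G -> R := l2_act mul inv v f.
Definition zg_star f : ZG G := map (fun p => (inv (fst p), snd p)) f.

Lemma fs_ract f v : finsupp v -> finsupp (ract f v).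
Proof.
  intros; apply fs_sumlist with (F := fun p g => v (mul g (inv (fst p))) * IZR (snd p)).
  intros; apply fs_mul_r, fs_rshift; auto.
Qed.

Lemma ract_ext f u v g : (forall x, u x = v x) -> ract f u g = ract f v g.
Proof. intros H; apply sumR_ext; intros; rewrite H; auto. Qed.

Lemma ract_plus f u v g : ract f (fun x => u x + v x) g = ract f u g + ract f v g.
Proof. unfold ract, l2_act. rewrite <- sumR_plus. apply sumR_ext; intros; ring. Qed.

Lemma ract_scal f a u g : ract f (fun x => a * u x) g = a * ract f u g.
Proof. unfold ract, l2_act. rewrite <- sumR_scal. apply sumR_ext; intros; ring. Qed.

Lemma ract_sub f u v g : ract f (fun x => u x - v x) g = ract f u g - ract f v g.
Proof.
  rewrite (ract_ext f _ (fun x => u x + (-1) * v x)) by (intros; ring).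
  rewrite ract_plus, ract_scal. ring.
Qed.

Lemma ract_translate f d u g : ract f (translate d u) g = translate d (ract f u) g.
Proof. apply sumR_ext; intros; unfold translate; rewrite (grp_assoc HG); auto. Qed.

Lemma adjoint f u v : finsupp u -> finsupp v ->
  inner (ract f u) v = inner u (ract (zg_star f) v).
Proof.
  intros Hu Hv. unfold inner, ract, l2_act, zg_star.
  transitivity (fsum (fun g =>
    sumR (map (fun p => u (mul g (inv (fst p))) * IZR (snd p) * v g) f))).
  { apply fsum_ext; intros. rewrite Rmult_comm, <- sumR_scal. apply sumR_ext; intros; ring. }
  transitivity (fsum (fun x => sumR (map (fun p => u x * (v (mul x (fst p)) * IZR (snd p))) f))).
  2:{ apply fsum_ext; intros. rewrite <- sumR_scal, map_map. apply sumR_ext; intros; simpl.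
      rewrite inv_inv; auto. }
  rewrite !fsum_sumlist; [| intros; apply fs_mul_r; auto | intros; apply fs_mul_l, Hv].
  apply sumR_ext; intros p _.
  rewrite <- (fsum_rshift (fst p) (fun x => u x * (v (mul x (fst p)) * IZR (snd p))));
    [|apply fs_mul_r; auto].
  apply fsum_ext; intros; rewrite cancel_inv_r; ring.
Qed.

Definition act_bound f := INR (length f) * sumR (map (fun p => IZR (snd p) ^ 2) f).

Lemma act_bound_nonneg f : 0 <= act_bound f.
Proof. apply Rmult_le_pos; [apply pos_INR|apply sumR_nonneg; intros; nra]. Qed.

Lemma sqnorm_ract f v : finsupp v -> sqnorm (ract f v) <= act_bound f * sqnorm v.
Proof.
  intros Hv. unfold sqnorm.
  set (F := fun p g => v (mul g (inv (fst p))) ^ 2 * IZR (snd p) ^ 2).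
  assert (HF : forall p, In p f -> finsupp (F p))
    by (intros; apply fs_mul_r, fs_sq, fs_rshift; auto).
  apply Rle_trans with (fsum (fun g => INR (length f) * sumR (map (fun p => F p g) f))).
  - apply fsum_le; [apply fs_sq, fs_ract; auto| apply fs_mul_l, fs_sumlist; auto|].
    intros g. unfold ract, l2_act. eapply Rle_trans; [apply sq_sum_le|].
    right; f_equal; apply sumR_ext; intros; unfold F; ring.
  - rewrite fsum_scal, fsum_sumlist by (auto using fs_sumlist).
    unfold act_bound. rewrite Rmult_assoc. right; f_equal.
    rewrite Rmult_comm, <- sumR_scal. apply sumR_ext; intros p _. unfold F.
    rewrite (fsum_ext _ (fun g => IZR (snd p) ^ 2 * (fun x => v x ^ 2) (mul g (inv (fst p)))))
      by (intros; ring).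
    assert (Hsq : finsupp (fun x => v x ^ 2)) by (apply fs_sq; auto).
    rewrite fsum_scal, (fsum_rshift (fst p) (fun x => v x ^ 2)); [ring|auto|].
    apply (fs_rshift (fst p) (fun x => v x ^ 2)); auto.
Qed.

Definition coeffR (x : ZG G) (g : G) : R := IZR (coeff x g).

Lemma coeffR_eq (x : ZG G) g :
  coeffR x g = sumR (map (fun p => if pb (fst p = g) then IZR (snd p) else 0) x).
Proof. unfold coeffR, coeff. induction x; simpl; auto. rewrite plus_IZR, IHx. destruct pb; auto. Qed.

Lemma coeffR_app (x y : ZG G) g : coeffR (x ++ y) g = coeffR x g + coeffR y g.
Proof. rewrite !coeffR_eq, map_app, sumR_app; auto. Qed.

Lemma coeffR_sub (x y : ZG G) g : coeffR (zg_sub x y) g = coeffR x g - coeffR y g.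
Proof.
  unfold zg_sub, zg_add. rewrite coeffR_app. unfold Rminus. f_equal.
  unfold coeffR, zg_opp, coeff. induction y as [|a y IH]; simpl; [ring|].
  rewrite !plus_IZR, IH. destruct pb; rewrite ?opp_IZR; ring.
Qed.

Lemma coeffR_lact d (x : ZG G) g : coeffR (zg_lact mul d x) g = coeffR x (mul (inv d) g).
Proof.
  rewrite !coeffR_eq. unfold zg_lact. rewrite map_map. apply sumR_ext; intros p _; simpl.
  unfold pb. destruct excluded_middle_informative as [H1|H1];
    destruct excluded_middle_informative as [H2|H2]; auto; exfalso.
  - apply H2. rewrite <- H1, cancel_inv_l; auto.
  - apply H1. rewrite H2. apply cancel_l_inv.
Qed.

Lemma coeffR_mul (x : ZG G) f g : coeffR (zg_mul mul x f) g = ract f (coeffR x) g.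
Proof.
  unfold zg_mul, ract, l2_act.
  transitivity (sumR (map (fun p => sumR (map (fun q =>
    if pb (mul (fst p) (fst q) = g) then IZR (snd p * snd q) else 0) f)) x)).
  { induction x as [|p x IH]; simpl; [rewrite coeffR_eq; auto|].
    rewrite coeffR_app, IH. f_equal. rewrite coeffR_eq, map_map. auto. }
  rewrite sumR_exchange. apply sumR_ext; intros q _.
  rewrite coeffR_eq, Rmult_comm, <- sumR_scal. apply sumR_ext; intros p _.
  rewrite mult_IZR. unfold pb. destruct excluded_middle_informative as [H1|H1];
    destruct excluded_middle_informative as [H2|H2]; try ring; exfalso.
  - apply H2. rewrite <- H1, cancel_r_inv; auto.
  - apply H1. rewrite H2. apply cancel_inv_r.
Qed.

Lemma fs_coeffR (x : ZG G) : finsupp (coeffR x).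
Proof.
  exists (map fst x). intros g H. unfold coeffR, coeff in H. induction x as [|p x IH]; simpl in *.
  - lra.
  - unfold pb in H. destruct excluded_middle_informative; [left; auto|].
    right; apply IH. rewrite Z.add_0_l in H. auto.
Qed.

Definition normal_op f v : G -> R := ract (zg_star f) (ract f v).

Lemma fs_normal_op f v : finsupp v -> finsupp (normal_op f v).
Proof. intros; apply fs_ract, fs_ract; auto. Qed.

Lemma inner_normal_op f u v : finsupp u -> finsupp v ->
  inner (ract f u) (ract f v) = inner (normal_op f u) v.
Proof.
  intros Hu Hv. rewrite inner_sym, adjoint by (auto using fs_ract). apply inner_sym.
Qed.

Lemma sqnorm_ract_inner f u : finsupp u -> sqnorm (ract f u) = inner (normal_op f u) u.
Proof.
  intros Hu. rewrite <- inner_normal_op by auto.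
  unfold sqnorm, inner. apply fsum_ext; intros; ring.
Qed.

(** Approximate solutions of the regularised normal equation
    [(A + ε) y = B] by gradient descent on the strictly convex energy
    [E(y) = ‖y·f‖² + ε‖y‖² - 2⟨B, y⟩], whose gradient is twice the residual. *)
Section Descent.
Variable f : ZG G.
Variable eps : R.
Hypothesis Heps : 0 < eps.
Variable B : G -> R.
Hypothesis HB : finsupp B.

Definition residual y : G -> R := fun x => normal_op f y x + eps * y x - B x.
Definition energy y := sqnorm (ract f y) + eps * sqnorm y - 2 * inner B y.

Lemma fs_residual y : finsupp y -> finsupp (residual y).
Proof.
  intros; apply fs_sub; auto. apply fs_plus; auto using fs_normal_op, fs_mul_l.
Qed.

Lemma energy_lower y : finsupp y -> - (sqnorm B / eps) <= energy y.
Proof.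
  intros Hy. unfold energy.
  assert (0 <= sqnorm (ract f y)) by (apply sqnorm_nonneg, fs_ract; auto).
  pose proof (two_inner_le y B eps Hy HB Heps). rewrite inner_sym in H0.
  pose proof (Rle_abs (inner B y)). lra.
Qed.

(** Step size [1/(‖f‖² + ε)], below the inverse Lipschitz constant of the gradient. *)
Definition step_size := / (act_bound f + eps).

Lemma step_size_pos : 0 < step_size.
Proof. unfold step_size; apply Rinv_0_lt_compat; pose proof (act_bound_nonneg f); lra. Qed.

Lemma energy_step y : finsupp y ->
  energy (fun x => y x - step_size * residual y x) <= energy y - step_size * sqnorm (residual y).
Proof.
  intros Hy. set (t := step_size). set (g := residual y).
  assert (Hg : finsupp g) by (apply fs_residual; auto).
  set (ry := ract f y). set (rg := ract f g).
  assert (Hry : finsupp ry) by (apply fs_ract; auto).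
  assert (Hrg : finsupp rg) by (apply fs_ract; auto).
  assert (Hact : ract f (fun x => y x - t * g x) = fun x => ry x - t * rg x).
  { apply functional_extensionality; intros x. rewrite ract_sub, ract_scal; auto. }
  assert (Hres : inner (normal_op f y) g + eps * inner y g - inner B g = sqnorm g).
  { replace (inner (normal_op f y) g + eps * inner y g - inner B g)
      with (1 * inner (normal_op f y) g + eps * inner y g + (-1) * inner B g) by ring.
    unfold inner, sqnorm. rewrite <- fsum_comb3 by (auto using fs_mul_r, fs_normal_op).
    apply fsum_ext; intros x. unfold g, residual. ring. }
  assert (Hlip : sqnorm rg <= act_bound f * sqnorm g) by (apply sqnorm_ract; auto).
  assert (0 <= sqnorm g) by (apply sqnorm_nonneg; auto).
  assert (Ht : t * (act_bound f + eps) = 1)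
    by (unfold t, step_size; field; pose proof (act_bound_nonneg f); lra).
  assert (0 < t) by apply step_size_pos.
  assert (Hcross : inner ry rg = inner (normal_op f y) g) by (apply inner_normal_op; auto).
  unfold energy. rewrite Hact, !sqnorm_sub_scal, inner_sub_scal, Hcross by auto.
  fold ry. assert (t ^ 2 * sqnorm rg <= t ^ 2 * act_bound f * sqnorm g)
    by (rewrite Rmult_assoc; apply Rmult_le_compat_l; nra).
  assert (t ^ 2 * act_bound f * sqnorm g + eps * t ^ 2 * sqnorm g = t * sqnorm g)
    by (transitivity (t * (t * (act_bound f + eps)) * sqnorm g); [ring|rewrite Ht; ring]).
  assert (t * (inner (normal_op f y) g + eps * inner y g - inner B g) = t * sqnorm g)
    by (rewrite Hres; ring).
  lra.
Qed.

Fixpoint descent (k : nat) : G -> R :=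
  match k with
  | O => fun _ => 0
  | S k => fun x => descent k x - step_size * residual (descent k) x
  end.

Lemma fs_descent k : finsupp (descent k).
Proof.
  induction k; simpl; [apply fs_zero|].
  apply fs_sub; auto. apply fs_mul_l, fs_residual; auto.
Qed.

Lemma energy_zero : energy (fun _ => 0) = 0.
Proof.
  unfold energy, sqnorm, inner.
  rewrite (fsum_ext (fun x => B x * 0) (fun _ => 0)) by (intros; ring).
  rewrite (fsum_ext (fun x => 0 ^ 2) (fun _ => 0)) by (intros; ring).
  rewrite (fsum_ext (fun x => ract f (fun _ => 0) x ^ 2) (fun _ => 0)).
  - rewrite fsum_zero. ring.
  - intros x. unfold ract, l2_act. rewrite sumR_zero; [ring|intros; ring].
Qed.

Lemma energy_descent k theta : (forall j, (j < k)%nat -> theta < sqnorm (residual (descent j))) ->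
  energy (descent k) <= - step_size * INR k * theta.
Proof.
  induction k; intros H; [simpl; rewrite energy_zero; lra|].
  simpl descent. eapply Rle_trans; [apply energy_step, fs_descent|].
  rewrite S_INR. assert (theta < sqnorm (residual (descent k))) by (apply H; lia).
  assert (energy (descent k) <= - step_size * INR k * theta) by (apply IHk; intros; apply H; lia).
  pose proof step_size_pos. nra.
Qed.

(** Since the energy is bounded below, the residual cannot stay large. *)
Lemma small_residual_exists theta : 0 < theta ->
  exists y, finsupp y /\ sqnorm (residual y) <= theta.
Proof.
  intros Ht. apply NNPP; intro Hn.
  assert (Hall : forall j, theta < sqnorm (residual (descent j))).
  { intros j. apply Rnot_le_lt. intro Hle. apply Hn. exists (descent j); split; auto using fs_descent. }
  destruct (nat_above (sqnorm B / eps / (step_size * theta))) as [k Hk].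
  pose proof (energy_descent k theta (fun j _ => Hall j)).
  pose proof (energy_lower (descent k) (fs_descent k)).
  pose proof step_size_pos.
  assert (sqnorm B / eps < step_size * theta * INR k).
  { apply Rmult_lt_reg_r with (/ (step_size * theta)); [apply Rinv_0_lt_compat; nra|].
    replace (step_size * theta * INR k * / (step_size * theta)) with (INR k) by (field; lra).
    auto. }
  nra.
Qed.

End Descent.

Lemma fs_abs_diff s w : finsupp w -> finsupp (fun x => Rabs (w (mul s x) - w x)).
Proof.
  intros H. apply fs_dom with (fun x => w (mul s x)) w; auto using fs_lshift.
  intros x -> ->. rewrite Rminus_0_r, Rabs_R0; auto.
Qed.

(** [boundary s A = |sA Δ A|], computed as an ℓ¹ norm of indicators. *)
Definition boundary s (A : list G) := fsum (fun x => Rabs (indicator A (mul s x) - indicator A x)).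

Lemma boundary_nonneg s A : 0 <= boundary s A.
Proof. apply fsum_nonneg; [apply fs_abs_diff, fs_indicator|intros; apply Rabs_pos]. Qed.

Lemma boundary_count s A : NoDup A ->
  INR (count_in (fun x => ~ In (mul s x) A) A + count_in (fun x => ~ In (mul (inv s) x) A) A)
  = boundary s A.
Proof.
  intros NA. unfold boundary. rewrite plus_INR, !count_sum.
  rewrite (fsum_ext _ (fun x => indicator A x * (1 - indicator A (mul s x))
                               + indicator A (mul s x) * (1 - indicator A x))).
  2:{ intros x. destruct (indicator_01 A x) as [-> | ->];
      destruct (indicator_01 A (mul s x)) as [-> | ->]; unfold Rabs; destruct Rcase_abs; lra. }
  assert (F1 : finsupp (fun x => indicator A (mul s x) * (1 - indicator A x)))
    by (apply fs_mul_r, fs_lshift, fs_indicator).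
  rewrite fsum_plus, <- (fsum_lshift (inv s) _ F1); [|apply fs_mul_r, fs_indicator|auto].
  rewrite (fsum_ext (fun x => indicator A (mul s (mul (inv s) x)) * (1 - indicator A (mul (inv s) x)))
     (fun x => indicator A x * (1 - indicator A (mul (inv s) x))))
    by (intros; rewrite cancel_l_inv; auto).
  rewrite !fsum_indicator_mul; auto.
  f_equal; apply sumR_ext; intros x _; unfold pb, indicator;
    destruct excluded_middle_informative, in_dec; try ring; contradiction.
Qed.

Lemma indicator_filter (p : G -> bool) A x :
  indicator (filter p A) x = if p x then indicator A x else 0.
Proof.
  unfold indicator. destruct (in_dec classic_eq_dec x (filter p A)) as [H|H]; rewrite filter_In in H.
  - destruct H as [H1 H2]; rewrite H2; destruct in_dec; auto; contradiction.
  - destruct (p x) eqn:E; auto. destruct in_dec; auto. exfalso; auto.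
Qed.

Lemma indicator_map_r a A y : indicator (map (fun x => mul x (inv a)) A) y = indicator A (mul y a).
Proof.
  unfold indicator. destruct in_dec as [H|H]; destruct in_dec as [H'|H']; auto; exfalso.
  - apply in_map_iff in H. destruct H as [x [E Hx]]. subst y. rewrite cancel_inv_r in H'. auto.
  - apply H. apply in_map_iff. exists (mul y a); split; auto. apply cancel_r_inv.
Qed.

Lemma boundary_rtranslate s a A : boundary s (map (fun x => mul x (inv a)) A) = boundary s A.
Proof.
  unfold boundary.
  rewrite <- (fsum_rshift (inv a) (fun x => Rabs (indicator A (mul s x) - indicator A x)))
    by (apply fs_abs_diff, fs_indicator).
  apply fsum_ext; intros y. rewrite inv_inv, !indicator_map_r, (grp_assoc HG); auto.
Qed.

Lemma boundary_split s (p : G -> bool) A : (forall x, p (mul s x) = p x) ->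
  boundary s A = boundary s (filter p A) + boundary s (filter (fun x => negb (p x)) A).
Proof.
  intros Hp. unfold boundary. rewrite <- fsum_plus by (apply fs_abs_diff, fs_indicator).
  apply fsum_ext; intros x. rewrite !indicator_filter, Hp.
  destruct (p x); simpl; rewrite Rminus_diag, Rabs_R0; ring.
Qed.

Section SpectralGap.
Variable D : G -> Prop.
Hypothesis HD : is_subgroup mul inv e D.
Variable S : list G.
Hypothesis HS : forall s, In s S -> D s.
Variable eps0 : R.
Hypothesis Heps0 : 0 < eps0.
Hypothesis Hnonfolner : forall F, NoDup F -> F <> [] -> (forall x, In x F -> D x) ->
  exists s, In s S /\ eps0 * INR (length F) <= INR (count_in (fun x => ~ In (mul s x) F) F
            + count_in (fun x => ~ In (mul (inv s) x) F) F).

(** A nonempty finite subset of a single right coset [Δa] satisfies the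
    isoperimetric inequality: translate it into [Δ] and use [Hnonfolner]. *)
Lemma isoperimetric_coset a P : NoDup P -> P <> [] -> (forall x, In x P -> D (mul x (inv a))) ->
  eps0 * INR (length P) <= sumR (map (fun s => boundary s P) S).
Proof.
  intros NP HPne HPa.
  set (F := map (fun x => mul x (inv a)) P).
  assert (NF : NoDup F).
  { apply map_inj_nodup; auto. intros x y Hxy. rewrite <- (cancel_inv_r x a), Hxy, cancel_inv_r; auto. }
  assert (FnE : F <> []) by (unfold F; destruct P; [contradiction|discriminate]).
  assert (FD : forall x, In x F -> D x)
    by (intros x Hx; apply in_map_iff in Hx; destruct Hx as [y [<- Hy]]; auto).
  destruct (Hnonfolner F NF FnE FD) as [s0 [Hs0 Hb]].
  rewrite boundary_count in Hb by auto.
  unfold F in Hb. rewrite boundary_rtranslate, length_map in Hb.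
  eapply Rle_trans; [apply Hb|].
  apply (sumR_ge_term (fun s => boundary s P)); auto. intros; apply boundary_nonneg.
Qed.

(** Isoperimetric inequality [ε₀ |A| ≤ Σ_{s∈S} |sA Δ A|] for all finite [A ⊆ Γ]:
    split off the part of [A] in one right [Δ]-coset, whose boundary is
    disjoint from that of the rest, and induct. *)
Lemma isoperimetric : forall A, NoDup A -> eps0 * INR (length A) <= sumR (map (fun s => boundary s A) S).
Proof.
  intros A. remember (length A) as n eqn:HlenA. revert A HlenA.
  induction n as [n IH] using (well_founded_induction lt_wf). intros A HlenA NA.
  destruct A as [|a A'].
  - simpl in HlenA; subst n; simpl. rewrite Rmult_0_r.
    apply sumR_nonneg; intros; apply boundary_nonneg.
  - destruct HD as [HDe [HDmul HDinv]].
    set (p := fun x => pb (D (mul x (inv a)))).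
    set (P := filter p (a :: A')). set (Q := filter (fun x => negb (p x)) (a :: A')).
    assert (Ha : p a = true).
    { unfold p, pb. destruct excluded_middle_informative as [|Hn]; auto.
      exfalso; apply Hn. rewrite (grp_inv_r HG). auto. }
    assert (Hlen : (length P + length Q = length (a :: A'))%nat) by apply filter_length_split.
    assert (HP : eps0 * INR (length P) <= sumR (map (fun s => boundary s P) S)).
    { apply (isoperimetric_coset a); [apply NoDup_filter; auto| |].
      - unfold P; simpl; rewrite Ha; discriminate.
      - intros x Hx. apply filter_In in Hx. destruct Hx as [_ Hx]. unfold p, pb in Hx.
        destruct excluded_middle_informative; auto; discriminate. }
    assert (HQ : eps0 * INR (length Q) <= sumR (map (fun s => boundary s Q) S)).
    { assert (HPpos : (0 < length P)%nat) by (unfold P; simpl; rewrite Ha; simpl; lia).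
      apply (IH (length Q)); [lia|auto|apply NoDup_filter; auto]. }
    (* Left multiplication by [s ∈ Δ] preserves right [Δ]-cosets. *)
    assert (Hsplit : forall s, In s S -> boundary s (a :: A') = boundary s P + boundary s Q).
    { intros s Hs. apply boundary_split. intros x. unfold p, pb. rewrite <- (grp_assoc HG).
      destruct excluded_middle_informative as [H1|H1];
        destruct excluded_middle_informative as [H2|H2]; auto; exfalso.
      apply H2. rewrite <- (cancel_inv_l s (mul x (inv a))).
      apply HDmul; [apply HDinv; apply HS|]; auto. }
    rewrite (sumR_ext _ (fun s => boundary s P + boundary s Q)), sumR_plus by auto.
    rewrite HlenA, <- Hlen, plus_INR. lra.
Qed.

Lemma list_argmin (phi : G -> R) (A : list G) : A <> [] ->
  exists a0, In a0 A /\ forall x, In x A -> phi a0 <= phi x.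
Proof.
  induction A as [|a A IH]; intros H; [contradiction|].
  destruct A as [|b A'].
  - exists a; split; simpl; auto. intros x [->|[]]; lra.
  - destruct IH as [a1 [H1 H2]]; [discriminate|].
    destruct (Rle_dec (phi a) (phi a1)).
    + exists a; split; simpl; auto. intros x [->|Hx]; [lra|]. specialize (H2 x Hx); lra.
    + exists a1; split; [right; auto|]. intros x [->|Hx]; [lra|auto].
Qed.

Lemma nodup_remove (a : G) A : NoDup A -> NoDup (remove classic_eq_dec a A).
Proof.
  induction 1; simpl; [constructor|]. destruct classic_eq_dec; auto. constructor; auto.
  intro Hx; apply H. apply in_remove in Hx; tauto.
Qed.

(** Variation of [m·1_A + ψ] when [ψ ≥ 0] vanishes off [A] ("layer cake"). *)
Lemma abs_diff_layer (m a b ia ib : R) : 0 <= m -> 0 <= a -> 0 <= b ->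
  (ia = 0 /\ a = 0 \/ ia = 1) -> (ib = 0 /\ b = 0 \/ ib = 1) ->
  Rabs ((m * ia + a) - (m * ib + b)) = m * Rabs (ia - ib) + Rabs (a - b).
Proof.
  intros Hm Ha Hb [[-> ->]| ->] [[-> ->]| ->];
    unfold Rabs; repeat destruct Rcase_abs; lra.
Qed.

Lemma variation_peel (phi : G -> R) A m s : finsupp phi -> 0 <= m ->
  (forall x, In x A -> m <= phi x) -> (forall x, ~ In x A -> phi x = 0) ->
  fsum (fun x => Rabs (phi (mul s x) - phi x)) =
  m * boundary s A + fsum (fun x => Rabs ((phi (mul s x) - m * indicator A (mul s x))
                                          - (phi x - m * indicator A x))).
Proof.
  intros Hfs Hm Hmin Hout. set (psi := fun x => phi x - m * indicator A x).
  assert (Hpsi : forall x, 0 <= psi x /\ (indicator A x = 0 /\ psi x = 0 \/ indicator A x = 1)).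
  { intros x. unfold psi, indicator. destruct in_dec as [Hx|Hx].
    - specialize (Hmin x Hx); lra.
    - rewrite Hout; auto; lra. }
  assert (Hfpsi : finsupp psi) by (apply fs_sub; auto using fs_mul_l, fs_indicator).
  unfold boundary.
  rewrite <- fsum_scal, <- fsum_plus
    by first [exact (fs_abs_diff s psi Hfpsi) | auto using fs_mul_l, fs_abs_diff, fs_indicator].
  apply fsum_ext; intros x. fold (psi (mul s x)) (psi x).
  replace (phi (mul s x)) with (m * indicator A (mul s x) + psi (mul s x)) by (unfold psi; ring).
  replace (phi x) with (m * indicator A x + psi x) by (unfold psi; ring).
  destruct (Hpsi x), (Hpsi (mul s x)). apply abs_diff_layer; auto.
Qed.

(** ℓ¹ form of the isoperimetric inequality, by induction on the support:
    peel off the minimum of [φ] over its support as a multiple of an indicator. *)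
Lemma l1_isoperimetric_aux : forall n A (phi : G -> R), length A = n -> NoDup A ->
  covers A phi -> (forall x, 0 <= phi x) ->
  eps0 * fsum phi <= sumR (map (fun s => fsum (fun x => Rabs (phi (mul s x) - phi x))) S).
Proof.
  intros n. induction n as [n IH] using (well_founded_induction lt_wf).
  intros A phi HlenA NA CA Hpos.
  assert (Hfs : finsupp phi) by (exists A; auto).
  assert (Hout : forall x, ~ In x A -> phi x = 0) by (intros x Hx; apply NNPP; auto).
  destruct A as [|a A'].
  - rewrite (fsum_eq phi []); simpl; [|constructor|auto]. rewrite Rmult_0_r.
    apply sumR_nonneg; intros; apply fsum_nonneg; [apply fs_abs_diff; auto|intros; apply Rabs_pos].
  - destruct (list_argmin phi (a :: A') ltac:(discriminate)) as [a0 [Ha0 Hmin]].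
    set (A := a :: A') in *. set (m := phi a0).
    set (psi := fun x => phi x - m * indicator A x).
    assert (Hm : 0 <= m) by apply Hpos.
    assert (Hpsi : forall x, 0 <= psi x).
    { intros x. unfold psi, indicator. destruct in_dec as [Hx|Hx].
      - specialize (Hmin x Hx); unfold m; lra.
      - rewrite Hout; auto; lra. }
    set (A2 := remove classic_eq_dec a0 A).
    assert (CA2 : covers A2 psi).
    { intros x Hx. apply in_in_remove.
      - intro E; subst x. apply Hx. unfold psi, indicator. destruct in_dec; [unfold m; ring|contradiction].
      - apply NNPP; intro Hn. apply Hx. unfold psi, indicator. destruct in_dec; [contradiction|].
        rewrite Hout; auto; ring. }
    assert (LA2 : (length A2 < length A)%nat) by (apply remove_length_lt; auto).
    assert (IH2 := IH (length A2) ltac:(lia) A2 psi eq_refl (nodup_remove _ _ NA) CA2 Hpsi).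
    assert (Ef : fsum phi = m * INR (length A) + fsum psi).
    { assert (Hfpsi : finsupp psi) by (exists A2; auto).
      rewrite <- fsum_indicator, <- fsum_scal, <- fsum_plus; auto using fs_indicator, fs_mul_l.
      apply fsum_ext; intros; unfold psi; ring. }
    rewrite (sumR_ext _ (fun s => m * boundary s A + fsum (fun x => Rabs (psi (mul s x) - psi x))))
      by (intros; apply variation_peel; auto).
    rewrite sumR_plus, sumR_scal, Ef.
    assert (m * (eps0 * INR (length A)) <= m * sumR (map (fun s => boundary s A) S))
      by (apply Rmult_le_compat_l; auto using isoperimetric).
    lra.
Qed.

Lemma l1_isoperimetric (phi : G -> R) : finsupp phi -> (forall x, 0 <= phi x) ->
  eps0 * fsum phi <= sumR (map (fun s => fsum (fun x => Rabs (phi (mul s x) - phi x))) S).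
Proof. intros H Hp. destruct (fs_cover _ H) as [A [NA CA]]. eapply l1_isoperimetric_aux; eauto. Qed.

Lemma sq_variation_le (v : G -> R) s lam : finsupp v -> 0 < lam ->
  fsum (fun x => Rabs (v (mul s x) ^ 2 - v x ^ 2)) <=
  lam / 2 * sqnorm (fun x => v x - v (mul (inv s) x)) + 2 / lam * sqnorm v.
Proof.
  intros Hv Hlam.
  assert (Hdiff : sqnorm (fun x => v x - v (mul (inv s) x)) = fsum (fun x => (v (mul s x) - v x) ^ 2)).
  { unfold sqnorm. rewrite <- (fsum_lshift s (fun x => (v x - v (mul (inv s) x)) ^ 2)).
    - apply fsum_ext; intros; rewrite cancel_inv_l; auto.
    - apply fs_sq, fs_sub, fs_lshift; auto. }
  assert (Hshift : fsum (fun x => v (mul s x) ^ 2) = sqnorm v)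
    by (apply (fsum_lshift s (fun x => v x ^ 2)), fs_sq; auto).
  assert (Fa : finsupp (fun x => (v (mul s x) - v x) ^ 2)) by (apply fs_sq, fs_sub; auto using fs_lshift).
  assert (Fb : finsupp (fun x => v (mul s x) ^ 2)) by (apply (fs_lshift s (fun x => v x ^ 2)), fs_sq; auto).
  assert (Fc : finsupp (fun x => v x ^ 2)) by (apply fs_sq; auto).
  rewrite Hdiff.
  replace (lam / 2 * fsum (fun x => (v (mul s x) - v x) ^ 2) + 2 / lam * sqnorm v)
    with (lam * / 2 * fsum (fun x => (v (mul s x) - v x) ^ 2)
          + / lam * fsum (fun x => v (mul s x) ^ 2) + / lam * fsum (fun x => v x ^ 2))
    by (rewrite Hshift; unfold sqnorm; field; lra).
  rewrite <- fsum_comb3 by auto.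
  apply fsum_le; [apply (fs_abs_diff s (fun x => v x ^ 2)); auto|apply fs_plus; [apply fs_plus|]; apply fs_mul_l; auto|].
  intros x. set (a := v (mul s x)). set (b := v x).
  replace (a ^ 2 - b ^ 2) with ((a - b) * (a + b)) by ring.
  pose proof (young_abs lam (a - b) (a + b) Hlam).
  assert (0 < / lam) by (apply Rinv_0_lt_compat; auto).
  assert ((a + b) ^ 2 * / lam <= 2 * (a ^ 2 + b ^ 2) * / lam)
    by (apply Rmult_le_compat_r; [lra|pose proof (pow2_ge_0 (a - b)); nra]).
  unfold Rdiv in *. lra.
Qed.

Definition gap_const := (4 * (INR (length S) + 1) / eps0) / eps0.

Lemma gap_const_nonneg : 0 <= gap_const.
Proof.
  unfold gap_const, Rdiv. pose proof (pos_INR (length S)).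
  assert (0 < / eps0) by (apply Rinv_0_lt_compat; auto).
  apply Rmult_le_pos; [apply Rmult_le_pos|]; lra.
Qed.

Lemma spectral_gap (v : G -> R) : finsupp v ->
  sqnorm v <= gap_const * sumR (map (fun s => sqnorm (fun x => v x - v (mul (inv s) x))) S).
Proof.
  intros Hv. set (k := INR (length S)). set (lam := 4 * (k + 1) / eps0).
  set (Q := sumR (map (fun s => sqnorm (fun x => v x - v (mul (inv s) x))) S)).
  assert (Hk : 0 <= k) by apply pos_INR.
  assert (Hlam : 0 < lam) by (apply Rdiv_lt_0_compat; lra).
  pose proof (l1_isoperimetric (fun x => v x ^ 2) ltac:(apply fs_sq; auto)
                ltac:(intros; apply pow2_ge_0)) as H1.
  fold (sqnorm v) in H1.
  assert (H2 : eps0 * sqnorm v <= lam / 2 * Q + k * (2 / lam) * sqnorm v).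
  { eapply Rle_trans; [apply H1|]. unfold Q. rewrite <- sumR_scal.
    replace (k * (2 / lam) * sqnorm v) with (sumR (map (fun _ => 2 / lam * sqnorm v) S))
      by (rewrite sumR_const; unfold k; ring).
    rewrite <- sumR_plus. apply sumR_le; intros; apply sq_variation_le; auto. }
  assert (Hkl : k * (2 / lam) <= eps0 / 2).
  { unfold lam. replace (k * (2 / (4 * (k + 1) / eps0))) with (eps0 / 2 * (k / (k + 1)))
      by (field; lra).
    assert (k / (k + 1) <= 1) by (apply Rmult_le_reg_r with (k + 1); [lra|field_simplify; lra]).
    nra. }
  assert (0 <= sqnorm v) by (apply sqnorm_nonneg; auto).
  unfold gap_const. fold k lam Q.
  apply Rmult_le_reg_l with (eps0 / 2); [lra|].
  replace (eps0 / 2 * (lam / eps0 * Q)) with (lam / 2 * Q) by (field; lra). nra.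
Qed.

End SpectralGap.

Section Errors.
Variable f : ZG G.
Variable eps : R.
Hypothesis Heps : 0 < eps.
Hypothesis Heps1 : eps <= 1.
Variable B : G -> R.
Hypothesis HB : finsupp B.
Variables (d : G) (gam y : G -> R).
Hypothesis Hgam : finsupp gam.
Hypothesis Hy : finsupp y.
Hypothesis Hid : forall x, normal_op f gam x = B x - translate d B x.

Definition defect : G -> R := fun x => gam x - (y x - translate d y x).

Let res := residual f eps B y.
Let dres : G -> R := fun x => res x - translate d res x.

Lemma fs_defect : finsupp defect.
Proof. apply fs_sub, fs_sub; auto using fs_translate. Qed.

Lemma defect_equation x : normal_op f defect x + eps * defect x = eps * gam x - dres x.
Proof.
  unfold normal_op, defect, dres, res, residual.
  replace (ract f (fun x => gam x - (y x - translate d y x)))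
    with (fun z => ract f gam z - (ract f y z - translate d (ract f y) z))
    by (apply functional_extensionality; intros; rewrite !ract_sub, ract_translate; auto).
  rewrite !ract_sub, ract_translate. fold (normal_op f gam) (normal_op f y). rewrite Hid.
  unfold translate. ring.
Qed.

Lemma defect_energy :
  sqnorm (ract f defect) + eps * sqnorm defect = eps * inner gam defect - inner dres defect.
Proof.
  assert (Hu := fs_defect).
  assert (Hr : finsupp res) by (apply fs_residual; auto).
  assert (Hdres : finsupp dres) by (apply fs_sub; auto using fs_translate).
  rewrite sqnorm_ract_inner by auto. unfold inner, sqnorm.
  replace (fsum (fun x => normal_op f defect x * defect x) + eps * fsum (fun x => defect x ^ 2))
    with (1 * fsum (fun x => normal_op f defect x * defect x) + eps * fsum (fun x => defect x ^ 2))
    by ring.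
  replace (eps * fsum (fun x => gam x * defect x) - fsum (fun x => dres x * defect x))
    with (eps * fsum (fun x => gam x * defect x) + (-1) * fsum (fun x => dres x * defect x))
    by ring.
  rewrite <- !fsum_comb2 by (auto using fs_mul_l, fs_sq).
  apply fsum_ext; intros x.
  replace (1 * (normal_op f defect x * defect x) + eps * defect x ^ 2)
    with (defect x * (normal_op f defect x + eps * defect x)) by ring.
  rewrite defect_equation. ring.
Qed.

Lemma error_bounds : sqnorm res <= eps ^ 4 ->
  sqnorm defect <= 2 * sqnorm gam + 8 /\ sqnorm (ract f defect) <= eps * (sqnorm gam + 4).
Proof.
  intros Hres. assert (Hu := fs_defect).
  assert (Hr : finsupp res) by (apply fs_residual; auto).
  assert (Hdres : finsupp dres) by (apply fs_sub; auto using fs_translate).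
  assert (Hgam_u : 2 * Rabs (inner gam defect) <= 2 * sqnorm gam + sqnorm defect / 2)
    by (apply two_inner_le; auto; lra).
  assert (Hdres_u : 2 * Rabs (inner defect dres) <= eps / 2 * sqnorm defect + sqnorm dres / (eps / 2))
    by (apply two_inner_le; auto; lra).
  rewrite inner_sym in Hdres_u.
  assert (Hdres_norm : sqnorm dres <= 4 * eps ^ 4).
  { eapply Rle_trans; [apply sqnorm_sub_le; auto using fs_translate|].
    rewrite sqnorm_translate; auto. lra. }
  assert (Hdiv : sqnorm dres / (eps / 2) <= 8 * eps ^ 3).
  { apply Rmult_le_reg_l with (eps / 2); [lra|].
    replace (eps / 2 * (sqnorm dres / (eps / 2))) with (sqnorm dres) by (field; lra). nra. }
  pose proof defect_energy.
  pose proof (Rle_abs (inner gam defect)). pose proof (Rle_abs (- inner dres defect)).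
  rewrite Rabs_Ropp in *.
  assert (0 <= sqnorm (ract f defect)) by (apply sqnorm_nonneg, fs_ract; auto).
  assert (0 <= sqnorm gam) by (apply sqnorm_nonneg; auto).
  assert (Heps3 : eps ^ 3 <= eps) by (assert (eps ^ 2 <= 1) by nra; nra).
  assert (Hgam_term : eps * inner gam defect <= eps * (sqnorm gam + sqnorm defect / 4))
    by (apply Rmult_le_compat_l; lra).
  assert (Hdres_term : - inner dres defect <= eps / 4 * sqnorm defect + 4 * eps ^ 3) by lra.
  assert (Hmain : sqnorm (ract f defect) + eps / 2 * sqnorm defect <= eps * sqnorm gam + 4 * eps ^ 3)
    by lra.
  split.
  - apply Rmult_le_reg_l with (eps / 2); [lra|].
    replace (eps / 2 * (2 * sqnorm gam + 8)) with (eps * sqnorm gam + 4 * eps) by field.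
    lra.
  - assert (0 <= eps / 2 * sqnorm defect) by (apply Rmult_le_pos; [lra|apply sqnorm_nonneg; auto]).
    rewrite Rmult_plus_distr_l. lra.
Qed.

End Errors.

(** A real solution: under the hypotheses of the theorem, with
    [γ_d = c(d)] and [B = b' f*], there is [w ∈ ℓ²(Γ)] with [γ_d = w - d w]. *)
Section Solution.
Variable D : G -> Prop.
Hypothesis HD : is_subgroup mul inv e D.
Variable S : list G.
Hypothesis HS : forall s, In s S -> D s.
Variable eps0 : R.
Hypothesis Heps0 : 0 < eps0.
Hypothesis Hnonfolner : forall F, NoDup F -> F <> [] -> (forall x, In x F -> D x) ->
  exists s, In s S /\ eps0 * INR (length F) <= INR (count_in (fun x => ~ In (mul s x) F) F
            + count_in (fun x => ~ In (mul (inv s) x) F) F).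
Variable enum : nat -> G.
Hypothesis Hsurj : forall g, exists k, enum k = g.
Variable f : ZG G.
Hypothesis Hf : forall v : G -> R, in_l2 v -> (forall g, l2_act mul inv v f g = 0) ->
  forall g, v g = 0.
Variable gam : G -> G -> R.
Hypothesis Hgam : forall d, finsupp (gam d).
Variable B : G -> R.
Hypothesis HB : finsupp B.
Hypothesis Hid : forall d, D d -> forall x, normal_op f (gam d) x = B x - translate d B x.

Definition eps_seq (n : nat) : R := / INR (Datatypes.S n).

Lemma eps_seq_pos n : 0 < eps_seq n.
Proof. apply Rinv_0_lt_compat, lt_0_INR; lia. Qed.

Lemma eps_seq_le_1 n : eps_seq n <= 1.
Proof.
  unfold eps_seq. rewrite <- Rinv_1. apply Rinv_le_contravar; [lra|].
  rewrite S_INR. pose proof (pos_INR n). lra.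
Qed.

Lemma eps_seq_antitone n m : (n <= m)%nat -> eps_seq m <= eps_seq n.
Proof. intros Hnm. apply Rinv_le_contravar; [apply lt_0_INR; lia|apply le_INR; lia]. Qed.

(** The uniform ℓ² bound on approximate solutions given by the spectral gap. *)
Definition sol_bound := gap_const S eps0 * sumR (map (fun s => 6 * sqnorm (gam s) + 16) S).

Definition good_approx (n : nat) (y : G -> R) : Prop :=
  finsupp y /\ sqnorm y <= sol_bound /\
  forall d, D d -> sqnorm (defect d (gam d) y) <= 2 * sqnorm (gam d) + 8 /\
    sqnorm (ract f (defect d (gam d) y)) <= eps_seq n * (sqnorm (gam d) + 4).

Lemma good_approx_fs n y : good_approx n y -> finsupp y.
Proof. intros [H _]; auto. Qed.

Lemma good_approx_defect n y d : good_approx n y -> D d ->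
  sqnorm (defect d (gam d) y) <= 2 * sqnorm (gam d) + 8 /\
  sqnorm (ract f (defect d (gam d) y)) <= eps_seq n * (sqnorm (gam d) + 4).
Proof. intros [_ [_ H]] Hd; exact (H d Hd). Qed.

Lemma good_approx_exists n : exists y, good_approx n y.
Proof.
  pose proof (eps_seq_pos n) as Hpos. pose proof (eps_seq_le_1 n) as Hle1.
  destruct (small_residual_exists f (eps_seq n) Hpos B HB (eps_seq n ^ 4)) as [y [Hy Hres]].
  { apply pow_lt; auto. }
  assert (Herr : forall d, D d -> sqnorm (defect d (gam d) y) <= 2 * sqnorm (gam d) + 8 /\
            sqnorm (ract f (defect d (gam d) y)) <= eps_seq n * (sqnorm (gam d) + 4))
    by (intros d Hd; apply error_bounds with B; auto).
  exists y. split; [auto|split; [|auto]].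
  eapply Rle_trans; [apply (spectral_gap D HD S HS eps0 Heps0 Hnonfolner); auto|].
  apply Rmult_le_compat_l; [apply gap_const_nonneg; auto|].
  apply sumR_le. intros s Hs.
  replace (fun x => y x - y (mul (inv s) x)) with (fun x => gam s x - defect s (gam s) y x)
    by (apply functional_extensionality; intros x; unfold defect, translate; ring).
  eapply Rle_trans; [apply sqnorm_sub_le; auto using fs_defect|].
  destruct (Herr s (HS s Hs)). lra.
Qed.

Lemma limit_is_solution (ys : nat -> G -> R) (phi : nat -> nat) (w : G -> R) :
  (forall n, good_approx n (ys n)) -> strictly_incr phi ->
  (forall g, Un_cv (fun n => ys (phi n) g) (w g)) ->
  forall d, D d -> forall x, gam d x = w x - w (mul (inv d) x).
Proof.
  intros Hys Hphi Hw d Hd.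
  set (u := fun n => defect d (gam d) (ys (phi n))).
  set (ubar := fun x => gam d x - (w x - w (mul (inv d) x))).
  assert (Hfu : forall n, finsupp (u n))
    by (intros; apply fs_defect; auto; apply (good_approx_fs (phi n)); auto).
  assert (Hcv : forall x, Un_cv (fun n => u n x) (ubar x)).
  { intros x. unfold u, ubar, defect, translate.
    apply CV_minus; [apply cv_const|apply CV_minus; auto]. }
  assert (Hl2 : in_l2 ubar).
  { exists (2 * sqnorm (gam d) + 8). apply limit_sq_sum_le with u; auto.
    intros n. apply (good_approx_defect (phi n)); auto. }
  assert (Hzero : forall g, l2_act mul inv ubar f g = 0).
  { intros g. apply (cv_limit_zero (fun n => ract f (u n) g) _ (sqnorm (gam d) + 4)).
    - apply (cv_sumR (fun n p => u n (mul g (inv (fst p))) * IZR (snd p))).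
      intros p _. apply CV_mult; auto. apply cv_const.
    - intros n. eapply Rle_trans; [apply point_le_sqnorm, fs_ract; auto|].
      eapply Rle_trans; [apply (good_approx_defect (phi n)); auto|].
      pose proof (eps_seq_antitone n (phi n) (strictly_incr_ge phi Hphi n)).
      assert (0 <= sqnorm (gam d)) by (apply sqnorm_nonneg; auto).
      unfold eps_seq in *. rewrite Rmult_comm. apply Rmult_le_compat_l; lra. }
  intros x. pose proof (Hf ubar Hl2 Hzero x). unfold ubar in *. lra.
Qed.

Lemma l2_solution : exists (w : G -> R) (M : R),
  (forall l, NoDup l -> sumR (map (fun g => w g ^ 2) l) <= M) /\
  (forall d, D d -> forall x, gam d x = w x - w (mul (inv d) x)).
Proof.
  set (ys := fun n => proj1_sig (constructive_indefinite_description _ (good_approx_exists n))).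
  assert (Hys : forall n, good_approx n (ys n))
    by (intros; unfold ys; destruct constructive_indefinite_description; auto).
  assert (Hbd : forall n g, Rabs (ys n g) <= sol_bound + 1).
  { intros n g. destruct (Hys n) as [Hfs [Hn _]].
    pose proof (point_le_sqnorm (ys n) g Hfs).
    assert (Rabs (ys n g) <= 1 + ys n g ^ 2)
      by (rewrite <- pow2_abs; pose proof (Rabs_pos (ys n g)); nra).
    lra. }
  destruct (diagonal_extraction enum Hsurj ys (sol_bound + 1) Hbd) as [phi [Hphi [w Hw]]].
  exists w, sol_bound. split.
  - apply limit_sq_sum_le with (fun n => ys (phi n)); auto; intros n;
      destruct (Hys (phi n)) as [? [? _]]; auto.
  - apply (limit_is_solution ys phi); auto.
Qed.

End Solution.

Lemma normal_equation (D : G -> Prop) f (c : G -> ZG G) (b' : ZG G) :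
  (forall d, D d -> zg_eq (zg_mul mul (c d) f) (zg_sub b' (zg_lact mul d b'))) ->
  forall d, D d -> forall x,
    normal_op f (coeffR (c d)) x = ract (zg_star f) (coeffR b') x
                                   - translate d (ract (zg_star f) (coeffR b')) x.
Proof.
  intros Hb' d Hd x. unfold normal_op.
  rewrite <- ract_translate, <- ract_sub. apply ract_ext; intros z.
  rewrite <- coeffR_mul. unfold coeffR at 1. rewrite (Hb' d Hd z).
  fold (coeffR (zg_sub b' (zg_lact mul d b')) z). rewrite coeffR_sub, coeffR_lact. auto.
Qed.

(** Integrality: if [c(d) = w - d w] for all [d] in an infinite subgroup and
    [w] is square summable, then [w] is integer valued, since [w] takes values
    in [w x + Z] on the infinite orbit [Δ⁻¹x]. *)
Lemma integral_solution (D : G -> Prop) (c : G -> ZG G) (w : G -> R) (M : R) :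
  (forall n, exists l, NoDup l /\ length l = n /\ forall x, In x l -> D x) ->
  (forall l, NoDup l -> sumR (map (fun g => w g ^ 2) l) <= M) ->
  (forall d, D d -> forall x, coeffR (c d) x = w x - w (mul (inv d) x)) ->
  forall x, exists k, w x = IZR k.
Proof.
  intros Hinf Hw Hcob x. apply (integral_val w M x Hw). intros n.
  destruct (Hinf n) as [l [Nl [Ll Dl]]].
  exists (map (fun d => mul (inv d) x) l). split; [|split].
  - apply map_inj_nodup; auto. intros a b Hab.
    assert (inv a = inv b) by (rewrite <- (cancel_r_inv (inv a) x), Hab, cancel_r_inv; auto).
    rewrite <- (inv_inv a), H, inv_inv; auto.
  - rewrite length_map; auto.
  - intros y Hy. apply in_map_iff in Hy. destruct Hy as [d [<- Hd]].
    exists (coeff (c d) x). pose proof (Hcob d (Dl d Hd) x) as Hx. unfold coeffR in Hx. lra.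
Qed.

Lemma coeff_build (k : G -> Z) L g : NoDup L -> (forall x, k x <> 0%Z -> In x L) ->
  coeff (map (fun x => (x, k x)) L) g = k g.
Proof.
  intros NL CL.
  assert (H : coeff (map (fun x => (x, k x)) L) g = if in_dec classic_eq_dec g L then k g else 0%Z).
  { clear CL. induction NL; simpl; auto. unfold coeff in *; simpl. rewrite IHNL.
    unfold pb. destruct excluded_middle_informative as [E|E]; simpl in E.
    - subst x. destruct (in_dec classic_eq_dec g l); [contradiction|].
      destruct classic_eq_dec; [|contradiction]. simpl. lia.
    - destruct classic_eq_dec; [subst; contradiction|]. simpl. destruct in_dec; lia. }
  rewrite H. destruct in_dec; auto. destruct (Z.eq_dec (k g) 0); auto. exfalso; auto.
Qed.

Lemma coboundary_of_integral_solution (D : G -> Prop) (c : G -> ZG G) (w : G -> R) (M : R) :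
  (forall l, NoDup l -> sumR (map (fun g => w g ^ 2) l) <= M) ->
  (forall x, exists k, w x = IZR k) ->
  (forall d, D d -> forall x, coeffR (c d) x = w x - w (mul (inv d) x)) ->
  is_coboundary mul D c.
Proof.
  intros Hw Hint Hcob.
  set (k := fun x => proj1_sig (constructive_indefinite_description _ (Hint x))).
  assert (Hk : forall x, w x = IZR (k x))
    by (intros x; unfold k; destruct constructive_indefinite_description; auto).
  destruct (nat_above M) as [K HK].
  destruct (cover_bound (fun x => k x <> 0%Z) K) as [l0 Hl0].
  { intros l Nl Pl. apply INR_le.
    assert (INR (length l) <= sumR (map (fun g => w g ^ 2) l)).
    { rewrite <- (Rmult_1_r (INR (length l))), <- sumR_const. apply sumR_le. intros x Hx.
      rewrite Hk. replace (IZR (k x) ^ 2) with (IZR (k x * k x)) by (rewrite mult_IZR; ring).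
      apply IZR_le. specialize (Pl x Hx). nia. }
    specialize (Hw l Nl). lra. }
  set (b := map (fun x => (x, k x)) (nodup classic_eq_dec l0)).
  assert (Hb : forall g, coeff b g = k g)
    by (intros; apply coeff_build; [apply NoDup_nodup|intros; apply nodup_In; auto]).
  exists b. intros d Hd g. apply eq_IZR.
  fold (coeffR (c d) g) (coeffR (zg_sub b (zg_lact mul d b)) g).
  rewrite coeffR_sub, coeffR_lact. unfold coeffR. rewrite !Hb, <- !Hk. apply Hcob; auto.
Qed.

End Group.

Lemma nonamenable_nonfolner {G} (mul : G -> G -> G) (inv : G -> G) (D : G -> Prop) :
  ~ amenable_subgroup mul inv D ->
  exists S eps0, (forall s, In s S -> D s) /\ 0 < eps0 /\
   forall F, NoDup F -> F <> [] -> (forall x, In x F -> D x) ->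
   exists s, In s S /\ eps0 * INR (length F) <= INR (count_in (fun x => ~ In (mul s x) F) F
            + count_in (fun x => ~ In (mul (inv s) x) F) F).
Proof.
  intros Hn. unfold amenable_subgroup in Hn.
  apply not_all_ex_not in Hn. destruct Hn as [S Hn].
  apply not_all_ex_not in Hn. destruct Hn as [eps0 Hn].
  apply imply_to_and in Hn. destruct Hn as [HS Hn].
  apply imply_to_and in Hn. destruct Hn as [He Hn].
  exists S, eps0. split; auto. split; auto. intros F NF FnE FD.
  apply NNPP; intro H. apply Hn. exists F. repeat split; auto.
  intros s Hs. apply Rnot_le_lt. intro Hle. apply H. exists s; auto.
Qed.

(** A finite subgroup is amenable (take [F = Δ]), so a non-amenable one is infinite. *)
Lemma nonamenable_infinite {G} (mul : G -> G -> G) (inv : G -> G) (e : G) (D : G -> Prop) :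
  is_subgroup mul inv e D -> ~ amenable_subgroup mul inv D ->
  forall l : list G, exists d, D d /\ ~ In d l.
Proof.
  intros [HDe [HDmul HDinv]] Hn l. apply NNPP; intro H. apply Hn. intros S eps HS He.
  assert (Hl : forall d, D d -> In d l) by (intros d Hd; apply NNPP; intro Hd2; apply H; eauto).
  set (F := nodup (classic_eq_dec (G:=G)) (filter (fun x => pb (D x)) l)).
  assert (HF : forall x, In x F <-> D x).
  { intros x. unfold F. rewrite nodup_In, filter_In. unfold pb.
    destruct excluded_middle_informative; split; intuition; discriminate. }
  exists F. split; [apply NoDup_nodup|]. split.
  { intro E. assert (In e F) by (apply HF; auto). rewrite E in H0; auto. }
  split; [intros; apply HF; auto|].
  intros s Hs. rewrite !count_zero.
  - rewrite Nat.add_0_r, Rmult_comm. apply Rmult_lt_0_compat; auto.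
    destruct F eqn:EF; [exfalso; apply (proj2 (HF e)); auto|].
    apply lt_0_INR. simpl. lia.
  - intros x Hx Hn2. apply Hn2, HF. apply HF in Hx. apply HDmul; auto.
  - intros x Hx Hn2. apply Hn2, HF. apply HF in Hx. apply HDmul; auto.
Qed.

Lemma nonamenable_large_lists {G} (mul : G -> G -> G) (inv : G -> G) (e : G) (D : G -> Prop) :
  is_subgroup mul inv e D -> ~ amenable_subgroup mul inv D ->
  forall n, exists l, NoDup l /\ length l = n /\ forall x, In x l -> D x.
Proof.
  intros HD Hn n. induction n.
  - exists []; simpl; repeat split; auto; [constructor|intros; contradiction].
  - destruct IHn as [l [N1 [L1 D1]]]. destruct (nonamenable_infinite mul inv e D HD Hn l) as [d [Hd Hnd]].
    exists (d :: l). repeat split; [constructor; auto|simpl; auto|]. intros x [->|Hx]; auto.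
Qed.

Theorem proposition2p4
  (G : Type) (mul : G -> G -> G) (inv : G -> G) (e : G)
  (HG : is_group mul inv e) (Hcount : countably_infinite G)
  (D : G -> Prop) (HD : is_subgroup mul inv e D)
  (Hnonamen : ~ amenable_subgroup mul inv D)
  (f : ZG G)
  (Hf : forall v : G -> R, in_l2 v ->
          (forall g, l2_act mul inv v f g = 0%R) -> forall g, v g = 0%R)
  (c : G -> ZG G) (Hc : is_cocycle mul D c)
  (Hcf : is_coboundary mul D (fun d => zg_mul mul (c d) f)) :
  is_coboundary mul D c.
Proof.
  destruct (nonamenable_nonfolner mul inv D Hnonamen) as [S [eps0 [HS [Heps0 Hnonfolner]]]].
  destruct Hcount as [enum [_ Hsurj]].
  destruct Hcf as [b' Hb'].
  destruct (l2_solution mul inv e HG D HD S HS eps0 Heps0 Hnonfolner enum Hsurj f Hf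
              (fun d => coeffR (c d)) (fun d => fs_coeffR (c d))
              (ract mul inv (zg_star inv f) (coeffR b'))
              (fs_ract mul inv e HG _ _ (fs_coeffR b'))
              (normal_equation mul inv e HG D f c b' Hb'))
    as [w [M [Hw Hcob]]].
  apply (coboundary_of_integral_solution mul inv e HG D c w M Hw); auto.
  exact (integral_solution mul inv e HG D c w M
           (nonamenable_large_lists mul inv e D HD Hnonamen) Hw Hcob).
Qed.
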